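(* If a sequent $\Gamma\vdash M$ is derivable in system $\mathcal S$, then it has a normal derivation in $\mathcal S$.
   Context: Fix countably infinite sets of names and variables and the constructors $\mathsf{pub}$ (unary) and $\mathsf{sign},\mathsf{blind},\langle\cdot,\cdot\rangle,\{\cdot\}_{\cdot}$ (binary). Let $E$ be an equational theory whose signature $\Sigma_E$ is disjoint from the constructors, containing at most one associative-commutative (AC) binary symbol $\oplus$, presented by a rewrite system $R_E$ terminating and confluent modulo AC of $\oplus$. Terms: names, variables, $\mathsf{pub}(M)$, $\mathsf{sign}(M,N)$, $\mathsf{blind}(M,N)$, $\langle M,N\rangle$, $\{M\}_N$, $g(M_1,\dots,M_j)$ with $g\in\Sigma_E$; all ground. $\equiv$ is equality modulo AC, $\approx_E$ equality modulo $E$. A term is guarded if it is a name, a variable, or headed by a constructor. An $E$-context is a term with holes built only from symbols of $\Sigma_E$. Sequents $\Gamma\vdash M$ ($\Gamma$ a finite set of terms) have all terms in $R_E$-normal form modulo AC; $\Gamma,M$ means $\Gamma\cup\{M\}$. System $\mathcal S$: (id) $\Gamma\vdash M$ with no premise if $M\approx_E C[M_1,\dots,M_k]$ for an $E$-context $C$ and $M_i\in\Gamma$; (cut) from $\Gamma\vdash M$, $\Gamma,M\vdash T$ infer $\Gamma\vdash T$; ($p_L$) from $\Gamma,\langle M,N\rangle,M,N\vdash T$ infer $\Gamma,\langle M,N\rangle\vdash T$; ($p_R$) from $\Gamma\vdash M$, $\Gamma\vdash N$ infer $\Gamma\vdash\langle M,N\rangle$; ($e_L$) from $\Gamma,\{M\}_K\vdash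 K$ and $\Gamma,\{M\}_K,M,K\vdash N$ infer $\Gamma,\{M\}_K\vdash N$; ($e_R$) from $\Gamma\vdash M$, $\Gamma\vdash K$ infer $\Gamma\vdash\{M\}_K$; ($\mathsf{sign}_L$) from $\Gamma,\mathsf{sign}(M,K),\mathsf{pub}(L),M\vdash N$ infer $\Gamma,\mathsf{sign}(M,K),\mathsf{pub}(L)\vdash N$ provided $K\equiv L$; ($\mathsf{sign}_R$) from $\Gamma\vdash M$, $\Gamma\vdash K$ infer $\Gamma\vdash\mathsf{sign}(M,K)$; ($\mathsf{blind}_{L1}$) from $\Gamma,\mathsf{blind}(M,K)\vdash K$ and $\Gamma,\mathsf{blind}(M,K),M,K\vdash N$ infer $\Gamma,\mathsf{blind}(M,K)\vdash N$; ($\mathsf{blind}_R$) from $\Gamma\vdash M$, $\Gamma\vdash K$ infer $\Gamma\vdash\mathsf{blind}(M,K)$; ($\mathsf{blind}_{L2}$) from $\Gamma,\mathsf{sign}(\mathsf{blind}(M,R),K)\vdash R$ and $\Gamma,\mathsf{sign}(\mathsf{blind}(M,R),K),\mathsf{sign}(M,K),R\vdash N$ infer $\Gamma,\mathsf{sign}(\mathsf{blind}(M,R),K)\vdash N$; ($gs$) from $\Gamma\vdash A$, $\Gamma,A\vdash M$ infer $\Gamma\vdash M$, provided $A$ is a guarded subterm of a term in $\Gamma\cup\{M\}$. Left rules: $p_L,e_L,\mathsf{sign}_L,\mathsf{blind}_{L1},\mathsf{blind}_{L2},gs$; right rules: $p_R,e_R,\mathsf{sign}_R,\mathsf{blind}_R$.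 Branching left rules are the left rules other than $p_L$ and $\mathsf{sign}_L$. A normal derivation is a cut-free derivation such that (1) no left rule appears above a right rule, and (2) no left rule appears immediately above the left premise of a branching left rule (i.e., the derivation of the left premise of a branching left rule does not end with a left rule). *)

From Stdlib Require Import List Relations.
Import ListNotations.
Set Implicit Arguments.

Section Sequents.

(* ---- Signature Sigma_E of the equational theory: an arbitrary type of
   function symbols, disjoint from the constructors by construction. *)
Variable S : Type.

Inductive term : Type :=
| Name  : nat -> term
| Var   : nat -> term
| Pub   : term -> term
| Sign  : term -> term -> term
| Blind : term -> term -> term
| Pair  : term -> term -> term
| Enc   : term -> term -> term              (* {M}_K = Enc M K *)
| Fn    : S -> list term -> term.

Inductive pat : Type :=
| PV : nat -> pat
| PF : S -> list pat -> pat.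

Fixpoint inst (s : nat -> term) (p : pat) : term :=
  match p with
  | PV n => s n
  | PF g ps => Fn g (map (inst s) ps)
  end.

Inductive pvar_in (n : nat) : pat -> Prop :=
| pvi_var : pvar_in n (PV n)
| pvi_fn g ps p : In p ps -> pvar_in n p -> pvar_in n (PF g ps).

(* The equational theory E: arities, the (at most one) AC symbol, and the
   rewrite system R_E. *)
Record eqtheory : Type := EqTheory {
  arity : S -> nat;
  oplus : option S;
  rules : list (pat * pat)
}.

Variable th : eqtheory.

Inductive wf : term -> Prop :=
| wf_name n : wf (Name n)
| wf_var n : wf (Var n)
| wf_pub t : wf t -> wf (Pub t)
| wf_sign t u : wf t -> wf u -> wf (Sign t u)
| wf_blind t u : wf t -> wf u -> wf (Blind t u)
| wf_pair t u : wf t -> wf u -> wf (Pair t u)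
| wf_enc t u : wf t -> wf u -> wf (Enc t u)
| wf_fn g l : length l = arity th g -> Forall wf l -> wf (Fn g l).

Inductive wf_pat : pat -> Prop :=
| wfp_var n : wf_pat (PV n)
| wfp_fn g ps : length ps = arity th g -> Forall wf_pat ps -> wf_pat (PF g ps).

Inductive ctx_step (R : term -> term -> Prop) : term -> term -> Prop :=
| cs_root t u : R t u -> ctx_step R t u
| cs_pub t u : ctx_step R t u -> ctx_step R (Pub t) (Pub u)
| cs_sign1 t u v : ctx_step R t u -> ctx_step R (Sign t v) (Sign u v)
| cs_sign2 t u v : ctx_step R t u -> ctx_step R (Sign v t) (Sign v u)
| cs_blind1 t u v : ctx_step R t u -> ctx_step R (Blind t v) (Blind u v)
| cs_blind2 t u v : ctx_step R t u -> ctx_step R (Blind v t) (Blind v u)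
| cs_pair1 t u v : ctx_step R t u -> ctx_step R (Pair t v) (Pair u v)
| cs_pair2 t u v : ctx_step R t u -> ctx_step R (Pair v t) (Pair v u)
| cs_enc1 t u v : ctx_step R t u -> ctx_step R (Enc t v) (Enc u v)
| cs_enc2 t u v : ctx_step R t u -> ctx_step R (Enc v t) (Enc v u)
| cs_fn g l1 l2 t u :
    ctx_step R t u -> ctx_step R (Fn g (l1 ++ t :: l2)) (Fn g (l1 ++ u :: l2)).

Definition ac_root (t u : term) : Prop :=
  exists o, oplus th = Some o /\
   ((exists x y, t = Fn o [x; y] /\ u = Fn o [y; x]) \/
    (exists x y z, t = Fn o [Fn o [x; y]; z] /\ u = Fn o [x; Fn o [y; z]])).

Definition rule_root (t u : term) : Prop :=
  exists l r (s : nat -> term), In (l, r) (rules th) /\ t = inst s l /\ u = inst s r.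

Definition ac_eq : term -> term -> Prop := clos_refl_sym_trans term (ctx_step ac_root).

Definition e_eq : term -> term -> Prop :=
  clos_refl_sym_trans term (ctx_step (fun t u => ac_root t u \/ rule_root t u)).

Definition rew (t u : term) : Prop :=
  exists t' u', ac_eq t t' /\ ctx_step rule_root t' u' /\ ac_eq u' u.

Definition rew_star : term -> term -> Prop := clos_refl_trans term rew.

Definition nf (t : term) : Prop := ~ exists u, rew t u.

Definition admissible : Prop :=
  (forall o, oplus th = Some o -> arity th o = 2) /\
  (forall l r, In (l, r) (rules th) ->
     wf_pat l /\ wf_pat r /\ (exists g ps, l = PF g ps) /\
     (forall n, pvar_in n r -> pvar_in n l)) /\
  (forall t, wf t -> Acc (fun u v => rew v u) t) /\
  (forall t u1 u2, wf t -> rew_star t u1 -> rew_star t u2 ->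
     exists v1 v2, rew_star u1 v1 /\ rew_star u2 v2 /\ ac_eq v1 v2).

(* ---- Sequents. A context Gamma is represented by a list (all side
   conditions only depend on membership, so this is set semantics;
   "Gamma, M" is M :: Gamma). *)
Definition ctx := list term.

Definition good_seq (G : ctx) (T : term) : Prop :=
  Forall (fun t => wf t /\ nf t) (T :: G).

Inductive subterm (t : term) : term -> Prop :=
| st_refl : subterm t t
| st_pub u : subterm t u -> subterm t (Pub u)
| st_sign1 u v : subterm t u -> subterm t (Sign u v)
| st_sign2 u v : subterm t v -> subterm t (Sign u v)
| st_blind1 u v : subterm t u -> subterm t (Blind u v)
| st_blind2 u v : subterm t v -> subterm t (Blind u v)
| st_pair1 u v : subterm t u -> subterm t (Pair u v)
| st_pair2 u v : subterm t v -> subterm t (Pair u v)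
| st_enc1 u v : subterm t u -> subterm t (Enc u v)
| st_enc2 u v : subterm t v -> subterm t (Enc u v)
| st_fn g l u : In u l -> subterm t u -> subterm t (Fn g l).

Definition guarded (t : term) : Prop :=
  match t with Fn _ _ => False | _ => True end.

Inductive egen (G : ctx) : term -> Prop :=
| eg_hole t : In t G -> egen G t
| eg_fn g l : length l = arity th g -> Forall (egen G) l -> egen G (Fn g l).

Definition id_cond (G : ctx) (M : term) : Prop :=
  exists t, egen G t /\ e_eq M t.

Inductive rule_name : Type :=
| Rid | Rcut | RpL | RpR | ReL | ReR | RsignL | RsignR
| RblindL1 | RblindR | RblindL2 | Rgs.

Definition is_left (r : rule_name) : Prop :=
  match r with RpL | ReL | RsignL | RblindL1 | RblindL2 | Rgs => True | _ => False end.
Definition is_right (r : rule_name) : Prop :=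
  match r with RpR | ReR | RsignR | RblindR => True | _ => False end.
Definition is_branching_left (r : rule_name) : Prop :=
  match r with ReL | RblindL1 | RblindL2 | Rgs => True | _ => False end.

(* One-premise rule instances: rule, conclusion (G |- T), premise. *)
Inductive step1 : rule_name -> ctx -> term -> ctx -> term -> Prop :=
| s_pL G M N T : In (Pair M N) G -> step1 RpL G T (M :: N :: G) T
| s_signL G M K L N : In (Sign M K) G -> In (Pub L) G -> ac_eq K L ->
    step1 RsignL G N (M :: G) N.

(* Two-premise rule instances: rule, conclusion, left premise, right premise. *)
Inductive step2 : rule_name -> ctx -> term -> ctx -> term -> ctx -> term -> Prop :=
| s_cut G M T : step2 Rcut G T G M (M :: G) T
| s_pR G M N : step2 RpR G (Pair M N) G M G N
| s_eL G M K N : In (Enc M K) G -> step2 ReL G N G K (M :: K :: G) N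
| s_eR G M K : step2 ReR G (Enc M K) G M G K
| s_signR G M K : step2 RsignR G (Sign M K) G M G K
| s_blindL1 G M K N : In (Blind M K) G ->
    step2 RblindL1 G N G K (M :: K :: G) N
| s_blindR G M K : step2 RblindR G (Blind M K) G M G K
| s_blindL2 G M R K N : In (Sign (Blind M R) K) G ->
    step2 RblindL2 G N G R (Sign M K :: R :: G) N
| s_gs G A M : (exists B, In B (M :: G) /\ subterm A B) -> guarded A ->
    step2 Rgs G M G A (A :: G) M.

Inductive deriv : Type :=
| D0 : rule_name -> ctx -> term -> deriv
| D1 : rule_name -> ctx -> term -> deriv -> deriv
| D2 : rule_name -> ctx -> term -> deriv -> deriv -> deriv.

Definition concl (d : deriv) : ctx * term :=
  match d with D0 _ G T | D1 _ G T _ | D2 _ G T _ _ => (G, T) end.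
Definition root_rule (d : deriv) : rule_name :=
  match d with D0 r _ _ | D1 r _ _ _ | D2 r _ _ _ _ => r end.
Definition premises (d : deriv) : list deriv :=
  match d with D0 _ _ _ => [] | D1 _ _ _ d1 => [d1] | D2 _ _ _ d1 d2 => [d1; d2] end.

Fixpoint valid (d : deriv) : Prop :=
  match d with
  | D0 r G T => good_seq G T /\ r = Rid /\ id_cond G T
  | D1 r G T d1 => good_seq G T /\ valid d1 /\
      step1 r G T (fst (concl d1)) (snd (concl d1))
  | D2 r G T d1 d2 => good_seq G T /\ valid d1 /\ valid d2 /\
      step2 r G T (fst (concl d1)) (snd (concl d1)) (fst (concl d2)) (snd (concl d2))
  end.

Fixpoint all_nodes (P : deriv -> Prop) (d : deriv) : Prop :=
  P d /\ match d with
         | D0 _ _ _ => True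
         | D1 _ _ _ d1 => all_nodes P d1
         | D2 _ _ _ d1 d2 => all_nodes P d1 /\ all_nodes P d2
         end.

Fixpoint some_node (P : deriv -> Prop) (d : deriv) : Prop :=
  P d \/ match d with
         | D0 _ _ _ => False
         | D1 _ _ _ d1 => some_node P d1
         | D2 _ _ _ d1 d2 => some_node P d1 \/ some_node P d2
         end.

Definition cut_free (d : deriv) : Prop :=
  all_nodes (fun n => root_rule n <> Rcut) d.

Definition no_left_above_right (d : deriv) : Prop :=
  all_nodes (fun n => is_right (root_rule n) ->
    forall p, In p (premises n) -> ~ some_node (fun m => is_left (root_rule m)) p) d.

Definition left_premise_ok (d : deriv) : Prop :=
  all_nodes (fun n => is_branching_left (root_rule n) ->
    match n with
    | D2 _ _ _ d1 _ => ~ is_left (root_rule d1)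
    | _ => True
    end) d.

Definition normal (d : deriv) : Prop :=
  cut_free d /\ no_left_above_right d /\ left_premise_ok d.

Definition derivable (G : ctx) (M : term) : Prop :=
  exists d, valid d /\ concl d = (G, M).

End Sequents.

(* A normal derivation is a stack of left rules, on top of a derivation by
   (id) and right rules only ("synthesis"), where the left premise of every
   branching left rule is again a synthesis.  Every rule of S is admissible
   for normal derivations.  For a right rule, or for the left premise of a
   branching left rule, the left rules of the premise only enlarge the context
   and are permuted below.  For cut, one shows by induction on a normal
   derivation of G |- T that G may be replaced by any context D from which each
   member of G is either taken or synthesized.  Left rules are replayed; when
   the decomposed hypothesis is synthesized only by (id), it is AC-equal to a
   subterm of D, which (gs) adds first.  The key case is (id), T =E C[M1,...,Mk] with some Mi
   synthesized over D: by confluence of R_E modulo AC and since all terms are in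
   normal form, guarded subterms of T are AC-equal to subterms of hypotheses.
   Hence each synthesized guarded Mi that is E-equal to a guarded subterm of the
   sequent is introduced by (gs), and the remaining ones are replaced, all
   along the E-proof, by one fixed term over D, which yields an (id) instance. *)

From Stdlib Require Import List Relations Lia PeanoNat ClassicalEpsilon.
Import ListNotations.
Set Implicit Arguments.

Section Terms.
Variable S : Type.
Variable th : eqtheory S.
Notation term := (term S).
Local Hint Constructors subterm : core.

Definition term_ind_nested (P : term -> Prop)
  (HN : forall n, P (Name S n)) (HV : forall n, P (Var S n))
  (HP : forall t, P t -> P (Pub t))
  (HS : forall t u, P t -> P u -> P (Sign t u))
  (HB : forall t u, P t -> P u -> P (Blind t u))
  (HPa : forall t u, P t -> P u -> P (Pair t u))
  (HE : forall t u, P t -> P u -> P (Enc t u))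
  (HF : forall g l, Forall P l -> P (Fn g l)) : forall t, P t :=
  fix F t := match t with
  | Name _ n => HN n | Var _ n => HV n | Pub a => HP a (F a)
  | Sign a b => HS a b (F a) (F b) | Blind a b => HB a b (F a) (F b)
  | Pair a b => HPa a b (F a) (F b) | Enc a b => HE a b (F a) (F b)
  | Fn g l => HF g l ((fix G (l : list term) : Forall P l :=
       match l with [] => Forall_nil _ | x :: r => Forall_cons x (F x) (G r) end) l)
  end.

Definition pat_ind_nested (P : pat S -> Prop)
  (HV : forall n, P (PV S n))
  (HF : forall g l, Forall P l -> P (PF g l)) : forall p, P p :=
  fix F p := match p with
  | PV _ n => HV n
  | PF g l => HF g l ((fix G (l : list (pat S)) : Forall P l :=
       match l with [] => Forall_nil _ | x :: r => Forall_cons x (F x) (G r) end) l)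
  end.

Definition e_root (t u : term) : Prop := ac_root th t u \/ rule_root th t u.
Definition e_step := ctx_step e_root.

Lemma rst_map (R1 R2 : term -> term -> Prop) (f : term -> term) :
  (forall a b, R1 a b -> f a = f b \/ R2 (f a) (f b)) ->
  forall a b, clos_refl_sym_trans _ R1 a b -> clos_refl_sym_trans _ R2 (f a) (f b).
Proof.
  intros H a b Hab; induction Hab.
  - destruct (H _ _ H0) as [E|E]; [rewrite E; apply rst_refl | apply rst_step; auto].
  - apply rst_refl.
  - apply rst_sym; auto.
  - eapply rst_trans; eauto.
Qed.

Lemma ctx_step_mono (R1 R2 : term -> term -> Prop) :
  (forall a b, R1 a b -> R2 a b) -> forall a b, ctx_step R1 a b -> ctx_step R2 a b.
Proof.
  intros H a b Hab; induction Hab;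
    [apply cs_root|apply cs_pub|apply cs_sign1|apply cs_sign2|apply cs_blind1|apply cs_blind2
    |apply cs_pair1|apply cs_pair2|apply cs_enc1|apply cs_enc2|apply cs_fn]; auto.
Qed.

Lemma ctx_step_flip (R : term -> term -> Prop) a b :
  ctx_step R a b -> ctx_step (fun x y => R y x) b a.
Proof.
  induction 1;
    [apply cs_root|apply cs_pub|apply cs_sign1|apply cs_sign2|apply cs_blind1|apply cs_blind2
    |apply cs_pair1|apply cs_pair2|apply cs_enc1|apply cs_enc2|apply cs_fn]; auto.
Qed.

Lemma e_step_split x y :
  e_step x y -> ctx_step (ac_root th) x y \/ ctx_step (rule_root th) x y.
Proof.
  induction 1 as [t u [H|H]| | | | | | | | | |].
  1: left; apply cs_root; auto.
  1: right; apply cs_root; auto.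
  all: destruct IHctx_step as [E|E]; [left|right];
    first [apply cs_pub|apply cs_sign1|apply cs_sign2|apply cs_blind1|apply cs_blind2
          |apply cs_pair1|apply cs_pair2|apply cs_enc1|apply cs_enc2|apply cs_fn]; auto.
Qed.

Lemma ac_eq_e_eq a b : ac_eq th a b -> e_eq th a b.
Proof.
  apply rst_map with (f := fun x => x). intros x y Hxy. right.
  apply ctx_step_mono with (ac_root th); [intros; left|]; auto.
Qed.

Lemma cong_sign (R : term -> term -> Prop) a b a' b' :
  clos_refl_sym_trans _ (ctx_step R) a a' -> clos_refl_sym_trans _ (ctx_step R) b b' ->
  clos_refl_sym_trans _ (ctx_step R) (Sign a b) (Sign a' b').
Proof.
  intros Ha Hb. apply rst_trans with (Sign a' b).
  - apply rst_map with (R1 := ctx_step R) (f := fun x => Sign x b); auto.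
    intros; right; apply cs_sign1; auto.
  - apply rst_map with (R1 := ctx_step R) (f := fun x => Sign a' x); auto.
    intros; right; apply cs_sign2; auto.
Qed.

Lemma cong_fn (R : term -> term -> Prop) g l l' :
  Forall2 (clos_refl_sym_trans _ (ctx_step R)) l l' ->
  clos_refl_sym_trans _ (ctx_step R) (Fn g l) (Fn g l').
Proof.
  intro Hl. change (Fn g l) with (Fn g ([] ++ l)); change (Fn g l') with (Fn g ([] ++ l')).
  generalize (@nil term). induction Hl as [|x y r r' Hxy _ IH]; intros pre.
  - apply rst_refl.
  - apply rst_trans with (Fn g (pre ++ y :: r)).
    + apply rst_map with (R1 := ctx_step R) (f := fun z => Fn g (pre ++ z :: r)); auto.
      intros; right; apply cs_fn; auto.
    + specialize (IH (pre ++ [y])). rewrite <- !app_assoc in IH. exact IH.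
Qed.

Lemma subterm_trans (a b c : term) : subterm a b -> subterm b c -> subterm a c.
Proof. intros H1 H2; induction H2; eauto. Qed.

Lemma subterm_fn_inv (g : term) f l :
  subterm g (Fn f l) -> g = Fn f l \/ exists w, In w l /\ subterm g w.
Proof. intro H; inversion H; subst; eauto. Qed.

Lemma wf_sub (u t : term) : subterm u t -> wf th t -> wf th u.
Proof.
  induction 1; intro Hw; auto; apply IHsubterm; inversion Hw; subst; auto.
  rewrite Forall_forall in *; auto.
Qed.

Lemma pvar_sub (s : nat -> term) n p : pvar_in n p -> subterm (s n) (inst s p).
Proof. induction 1; simpl; eauto. eapply st_fn; eauto. apply in_map; auto. Qed.

Lemma inst_guarded_sub (s : nat -> term) p g :
  subterm g (inst s p) -> guarded g -> exists n, pvar_in n p /\ subterm g (s n).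
Proof.
  revert g. induction p using pat_ind_nested; intros gg Hg Hgg; simpl in *.
  - exists n; split; auto. constructor.
  - apply subterm_fn_inv in Hg. destruct Hg as [->|(w&Hw&Hgw)]; [contradiction|].
    apply in_map_iff in Hw. destruct Hw as (p&<-&Hp).
    rewrite Forall_forall in H. destruct (H p Hp gg Hgw Hgg) as (n&H1&H2).
    exists n; split; auto. econstructor; eauto.
Qed.

Lemma egen_mono G G' t : incl G G' -> egen th G t -> egen th G' t.
Proof.
  intro Hi. revert t. induction t using term_ind_nested; intro He; inversion He; subst;
    try (apply eg_hole; auto; fail).
  apply eg_fn; auto. rewrite Forall_forall in *. auto.
Qed.

Lemma egen_wf G t : Forall (wf th) G -> egen th G t -> wf th t.
Proof.
  intro HG. rewrite Forall_forall in HG. revert t.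
  induction t using term_ind_nested; intros He; inversion He; subst; auto.
  constructor; auto. rewrite Forall_forall in *. auto.
Qed.

Lemma id_cond_mono G G' t : incl G G' -> id_cond th G t -> id_cond th G' t.
Proof. intros Hi (u&H1&H2). exists u; split; auto. eapply egen_mono; eauto. Qed.

Lemma id_cond_in G x y : In y G -> e_eq th x y -> id_cond th G x.
Proof. intros; exists y; split; auto. apply eg_hole; auto. Qed.

Lemma id_cond_egen D D' t :
  egen th D t -> (forall y, In y D -> id_cond th D' y) -> id_cond th D' t.
Proof.
  intros He HD. revert He. induction t using term_ind_nested; intro He; inversion He; subst; auto.
  assert (Hex : Forall (fun x => exists u, egen th D' u /\ e_eq th x u) l).
  { rewrite Forall_forall in *. intros x Hx. apply H; auto. }
  assert (Hl' : exists l', Forall2 (fun x u => egen th D' u /\ e_eq th x u) l l').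
  { clear -Hex. induction Hex as [|x l (y&Hy) _ (l'&Hl')].
    - exists []; constructor.
    - exists (y :: l'); constructor; auto. }
  destruct Hl' as (l'&Hl'). exists (Fn g l'). split.
  - apply eg_fn. { rewrite <- (Forall2_length Hl'); auto. }
    clear -Hl'. induction Hl'; constructor; tauto.
  - apply cong_fn. clear -Hl'. induction Hl'; constructor; tauto.
Qed.

End Terms.

Section NormalForms.
Variable S : Type.
Variable th : eqtheory S.
Notation term := (term S).
Hypothesis rules_lhs_fn : forall l r, In (l, r) (rules th) -> exists g ps, l = PF g ps.

Lemma ac_root_fn (t u : term) :
  ac_root th t u -> (exists o l, t = Fn o l) /\ (exists o l, u = Fn o l).
Proof. intros (o&_&[(x&y&->&->)|(x&y&z&->&->)]); split; eauto. Qed.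

Lemma rule_root_fn (t u : term) : rule_root th t u -> exists o l, t = Fn o l.
Proof.
  intros (l&r&s&Hin&->&->). destruct (rules_lhs_fn _ _ Hin) as (g&ps&->). simpl; eauto.
Qed.

(* A constructor-headed term is only rewritten below its head, so AC-equality
   is inherited componentwise. *)
Ltac ac_eq_inv :=
  let H := fresh in
  intro H; unfold ac_eq in *; apply clos_rst_rstn1_iff in H;
  induction H as [|? ? Hyz Hn IH];
  [ repeat eexists; try apply rst_refl
  | destruct IH as (?&?&->&?&?);
    destruct Hyz as [Hs|Hs]; inversion Hs; subst;
    try match goal with
        | H : ac_root _ _ _ |- _ =>
            apply ac_root_fn in H; destruct H as [(?&?&?) (?&?&?)]; discriminate
        end;
    repeat eexists; eauto;
    match goal with
    | H : ctx_step _ ?a ?b |- clos_refl_sym_trans _ _ ?x ?b =>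
        eapply rst_trans; [eassumption | apply rst_step; exact H]
    | H : ctx_step _ ?b ?a |- clos_refl_sym_trans _ _ ?x ?b =>
        eapply rst_trans; [eassumption | apply rst_sym; apply rst_step; exact H]
    end].

Lemma ac_eq_pair_inv (a b t : term) : ac_eq th (Pair a b) t ->
  exists a' b', t = Pair a' b' /\ ac_eq th a a' /\ ac_eq th b b'.
Proof. ac_eq_inv. Qed.
Lemma ac_eq_sign_inv (a b t : term) : ac_eq th (Sign a b) t ->
  exists a' b', t = Sign a' b' /\ ac_eq th a a' /\ ac_eq th b b'.
Proof. ac_eq_inv. Qed.
Lemma ac_eq_blind_inv (a b t : term) : ac_eq th (Blind a b) t ->
  exists a' b', t = Blind a' b' /\ ac_eq th a a' /\ ac_eq th b b'.
Proof. ac_eq_inv. Qed.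
Lemma ac_eq_enc_inv (a b t : term) : ac_eq th (Enc a b) t ->
  exists a' b', t = Enc a' b' /\ ac_eq th a a' /\ ac_eq th b b'.
Proof. ac_eq_inv. Qed.

Lemma ac_eq_pub_inv (a t : term) : ac_eq th (Pub a) t -> exists a', t = Pub a' /\ ac_eq th a a'.
Proof.
  intro H; apply clos_rst_rstn1_iff in H.
  induction H as [|? ? Hyz Hn IH].
  - eexists; split; [reflexivity | apply rst_refl].
  - destruct IH as (?&->&?). destruct Hyz as [Hs|Hs]; inversion Hs; subst;
      try (apply ac_root_fn in H0; destruct H0 as [(?&?&?) (?&?&?)]; discriminate);
      eexists; split; eauto.
    + eapply rst_trans; [eassumption | apply rst_step; eassumption].
    + eapply rst_trans; [eassumption | apply rst_sym; apply rst_step; eassumption].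
Qed.

Lemma nf_ac_eq (t u : term) : nf th t -> ac_eq th t u -> nf th u.
Proof.
  intros Hn Hac [w (u'&w'&H1&H2&H3)]. apply Hn. exists w, u', w'. repeat split; auto.
  eapply rst_trans; eauto.
Qed.

Lemma nf_context (f : term -> term) :
  (forall x y, ctx_step (rule_root th) x y -> ctx_step (rule_root th) (f x) (f y)) ->
  (forall x y, ctx_step (ac_root th) x y -> ctx_step (ac_root th) (f x) (f y)) ->
  forall a, nf th (f a) -> nf th a.
Proof.
  intros H1 H2 a Hn [b (a'&b'&Ha&Hs&Hb)]. apply Hn. exists (f b), (f a'), (f b').
  repeat split; auto; apply rst_map with (R1 := ctx_step (ac_root th)); auto.
Qed.

Lemma nf_sub (u t : term) : subterm u t -> nf th t -> nf th u.
Proof.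
  induction 1; intro Hn; auto; apply IHsubterm.
  all: match goal with
    | Hn : nf _ (Pub ?x) |- _ =>
        apply (nf_context (fun z => Pub z)); [| | exact Hn]; intros; apply cs_pub; auto
    | Hn : nf _ (Fn ?g ?l), H : In _ ?l |- _ =>
        destruct (in_split _ _ H) as (l1&l2&->);
        apply (nf_context (fun x => Fn g (l1 ++ x :: l2))); [| | exact Hn];
        intros; apply cs_fn; auto
    | Hn : nf _ (?c ?x ?y), IH : subterm _ ?x |- _ =>
        apply (nf_context (fun z => c z y)); [| | exact Hn]; intros
    | Hn : nf _ (?c ?x ?y), IH : subterm _ ?y |- _ =>
        apply (nf_context (fun z => c x z)); [| | exact Hn]; intros
    end.
  all: first [apply cs_sign1 | apply cs_sign2 | apply cs_blind1 | apply cs_blind2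
             | apply cs_pair1 | apply cs_pair2 | apply cs_enc1 | apply cs_enc2]; auto.
Qed.

Lemma nf_sign (a b : term) : nf th a -> nf th b -> nf th (Sign a b).
Proof.
  intros Ha Hb [w (u'&w'&H1&H2&H3)].
  destruct (ac_eq_sign_inv H1) as (a'&b'&->&Ha'&Hb').
  inversion H2; subst.
  - destruct (rule_root_fn H) as (?&?&?); discriminate.
  - apply Ha. exists u, a', u. repeat split; auto. apply rst_refl.
  - apply Hb. exists u, b', u. repeat split; auto. apply rst_refl.
Qed.

Definition good (t : term) := wf th t /\ nf th t.

Lemma good_sub (u t : term) : subterm u t -> good t -> good u.
Proof. intros H [H1 H2]; split; [eapply wf_sub | eapply nf_sub]; eauto. Qed.

Lemma good_sign M K : good M -> good K -> good (Sign M K).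
Proof. intros [H1 H2] [H3 H4]. split; [constructor | apply nf_sign]; auto. Qed.

Lemma good_seq_iff G (T : term) : good_seq th G T <-> good T /\ Forall good G.
Proof. unfold good_seq, good. split; intro H; [inversion H | destruct H; constructor]; auto. Qed.

Lemma good_seq_concl G T : good_seq th G T -> good T.
Proof. intro H; apply good_seq_iff in H; tauto. Qed.

Lemma good_seq_ctx G T : good_seq th G T -> Forall good G.
Proof. intro H; apply good_seq_iff in H; tauto. Qed.

Lemma good_seq_in G T x : good_seq th G T -> In x G -> good x.
Proof. intros H Hx. apply good_seq_ctx in H. rewrite Forall_forall in H; auto. Qed.

Lemma Forall_good_in G x : Forall good G -> In x G -> good x.
Proof. rewrite Forall_forall; auto. Qed.

Lemma good_seq_weaken G G' T : good_seq th G T -> Forall good G' -> good_seq th G' T.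
Proof. intros H HG'. apply good_seq_iff. split; auto. eapply good_seq_concl; eauto. Qed.

Lemma good_prefix_weaken (P G G' : list term) T :
  good_seq th (P ++ G) T -> Forall good G' -> Forall good (P ++ G').
Proof.
  intros H HG'. apply good_seq_ctx in H. apply Forall_app in H. apply Forall_app; tauto.
Qed.

End NormalForms.

Section ChurchRosser.
Variable S : Type.
Variable th : eqtheory S.
Notation term := (term S).
Hypothesis Hadm : admissible th.

(* Confluence is only assumed for well-formed terms, whereas an E-proof between
   well-formed terms may pass through ill-formed ones; [trim] maps such a proof
   to one between well-formed terms. *)
Fixpoint trim (t : term) : term := match t with
 | Name _ n => Name S n | Var _ n => Var S n | Pub a => Pub (trim a)
 | Sign a b => Sign (trim a) (trim b) | Blind a b => Blind (trim a) (trim b)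
 | Pair a b => Pair (trim a) (trim b) | Enc a b => Enc (trim a) (trim b)
 | Fn g l => if Nat.eq_dec (length l) (arity th g) then Fn g (map trim l) else Name S 0
 end.

Lemma trim_fn g l : length l = arity th g -> trim (Fn g l) = Fn g (map trim l).
Proof. intro H. cbn [trim]. destruct (Nat.eq_dec (length l) (arity th g)); easy. Qed.

Lemma trim_fn_ill g l : length l <> arity th g -> trim (Fn g l) = Name S 0.
Proof. intro H. cbn [trim]. destruct (Nat.eq_dec (length l) (arity th g)); easy. Qed.

Lemma trim_wf t : wf th (trim t).
Proof.
  induction t using term_ind_nested; simpl; try (constructor; auto; fail).
  destruct (Nat.eq_dec (length l) (arity th g)); constructor.
  - rewrite length_map; auto.
  - apply Forall_map; auto.
Qed.

Lemma trim_id t : wf th t -> trim t = t.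
Proof.
  induction t using term_ind_nested; intro Hw; inversion Hw; subst;
    try (simpl; f_equal; auto; fail).
  rewrite trim_fn by auto. f_equal. rewrite Forall_forall in *.
  rewrite <- map_id. apply map_ext_in. auto.
Qed.

Lemma trim_inst (s : nat -> term) p :
  wf_pat th p -> trim (inst s p) = inst (fun n => trim (s n)) p.
Proof.
  induction p using pat_ind_nested; cbn [inst]; auto.
  intro Hw; inversion Hw; subst.
  rewrite trim_fn by (rewrite length_map; auto).
  f_equal. rewrite map_map. apply map_ext_in. intros a Ha.
  rewrite Forall_forall in *. auto.
Qed.

Lemma trim_e_step x y : e_step th x y -> trim x = trim y \/ e_step th (trim x) (trim y).
Proof.
  destruct Hadm as (Hop&Hrules&_&_).
  induction 1.
  1: { right. apply cs_root.
       destruct H as [(o&Ho&[(a&b&->&->)|(a&b&c&->&->)])|(l&r&s&Hin&->&->)].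
       - left. exists o. split; auto. left. exists (trim a), (trim b).
         repeat (rewrite trim_fn; [cbn [map] | simpl; symmetry; auto]); auto.
       - left. exists o. split; auto. right. exists (trim a), (trim b), (trim c).
         repeat (rewrite trim_fn; [cbn [map] | simpl; symmetry; auto]); auto.
       - right. destruct (Hrules _ _ Hin) as (Hl&Hr&_).
         exists l, r, (fun n => trim (s n)). rewrite !trim_inst; auto. }
  1-9: simpl; destruct IHctx_step as [E|E];
    [ left; f_equal; exact E
    | right; first [apply cs_pub|apply cs_sign1|apply cs_sign2|apply cs_blind1|apply cs_blind2
                   |apply cs_pair1|apply cs_pair2|apply cs_enc1|apply cs_enc2]; auto ].
  destruct (Nat.eq_dec (length (l1 ++ t :: l2)) (arity th g)) as [e|e].
  - rewrite !trim_fn by (rewrite length_app in *; simpl in *; auto).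
    rewrite !map_app. simpl.
    destruct IHctx_step as [E|E]; [left; rewrite E; reflexivity | right; apply cs_fn; auto].
  - left. rewrite !trim_fn_ill; auto. rewrite length_app in *; simpl in *; auto.
Qed.

Definition wf_e_step (x y : term) := wf th x /\ wf th y /\ e_step th x y.

Lemma e_eq_wf_path a b :
  wf th a -> wf th b -> e_eq th a b -> clos_refl_sym_trans _ wf_e_step a b.
Proof.
  intros Ha Hb H. rewrite <- (trim_id Ha), <- (trim_id Hb).
  apply (@rst_map _ (e_step th) wf_e_step trim); auto.
  intros x y Hxy. destruct (trim_e_step Hxy); auto. right. repeat split; auto using trim_wf.
Qed.

Definition joinable (a b : term) :=
  exists c d, rew_star th a c /\ rew_star th b d /\ ac_eq th c d.

Lemma ac_eq_rew_star c d v :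
  ac_eq th c d -> rew_star th d v -> exists w, rew_star th c w /\ ac_eq th w v.
Proof.
  intros H Hr. apply clos_rt_rt1n in Hr. destruct Hr as [|d1 v Hd Hr].
  - exists c; split; auto. apply rt_refl.
  - exists v; split; [|apply rst_refl].
    apply rt_trans with d1; [apply rt_step | apply clos_rt1n_rt; auto].
    destruct Hd as (d'&v'&H1&H2&H3). exists d', v'. repeat split; auto. eapply rst_trans; eauto.
Qed.

Lemma joinable_step a b b' :
  wf th b -> joinable a b -> e_step th b b' \/ e_step th b' b -> joinable a b'.
Proof.
  destruct Hadm as (_&_&_&Hconf).
  intros Hb (c&d&Hac&Hbd&Hcd) [Hs|Hs]; destruct (e_step_split Hs) as [E|E].
  - destruct (@ac_eq_rew_star b' b d) as (w&Hw1&Hw2); auto.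
    + apply rst_sym, rst_step; auto.
    + exists c, w. repeat split; auto. eapply rst_trans; eauto. apply rst_sym; auto.
  - assert (Hr : rew th b b') by (exists b, b'; repeat split; auto; apply rst_refl).
    destruct (Hconf b d b' Hb Hbd (rt_step _ _ _ _ Hr)) as (v1&v2&H1&H2&H3).
    destruct (ac_eq_rew_star Hcd H1) as (w&Hw1&Hw2).
    exists w, v2. repeat split; auto. eapply rt_trans; eauto. eapply rst_trans; eauto.
  - destruct (@ac_eq_rew_star b' b d) as (w&Hw1&Hw2); auto.
    + apply rst_step; auto.
    + exists c, w. repeat split; auto. eapply rst_trans; eauto. apply rst_sym; auto.
  - assert (Hr : rew th b' b) by (exists b', b; repeat split; auto; apply rst_refl).
    exists c, d. repeat split; auto. eapply rt_trans; [apply rt_step; eauto | auto].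
Qed.

Lemma e_eq_joinable a b : wf th a -> wf th b -> e_eq th a b -> joinable a b.
Proof.
  intros Ha Hb H. apply e_eq_wf_path in H; auto. apply clos_rst_rstn1_iff in H.
  induction H as [|y z Hyz Hn IH].
  - exists a, a. repeat split; try apply rt_refl. apply rst_refl.
  - destruct Hyz as [(Hy&Hz&Hs)|(Hz&Hy&Hs)]; apply (joinable_step (b := y)); auto.
Qed.

Lemma nf_rew_star a c : nf th a -> rew_star th a c -> c = a.
Proof.
  intros Hn H. apply clos_rt_rt1n in H. destruct H; auto. exfalso; apply Hn; eauto.
Qed.

Lemma good_e_eq_ac_eq a b : good th a -> good th b -> e_eq th a b -> ac_eq th a b.
Proof.
  intros [Ha Hna] [Hb Hnb] H. destruct (e_eq_joinable Ha Hb H) as (c&d&H1&H2&H3).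
  apply nf_rew_star in H1; apply nf_rew_star in H2; auto. subst; auto.
Qed.

End ChurchRosser.

Section GuardedSubterms.
Variable S : Type.
Variable th : eqtheory S.
Notation term := (term S).
Hypothesis Hadm : admissible th.
Local Hint Constructors subterm : core.

Lemma ctx_step_guarded_sub (R E : term -> term -> Prop) (a0 : term)
 (E_refl : forall x, E x x)
 (root_case : forall a b, R a b -> subterm a a0 -> forall g, subterm g b -> guarded g ->
      exists g', subterm g' a /\ guarded g' /\ E g g')
 (guarded_case : forall x y, ctx_step R x y -> guarded x -> subterm x a0 -> E y x) :
 forall a b, ctx_step R a b -> subterm a a0 -> forall g, subterm g b -> guarded g ->
   exists g', subterm g' a /\ guarded g' /\ E g g'.
Proof.
  induction 1; intros Ha0 gg Hg Hgg; eauto.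
  all: try (inversion Hg; subst;
    [ eexists; split; [apply st_refl | split; [exact I | apply guarded_case;
        [first [apply cs_pub|apply cs_sign1|apply cs_sign2|apply cs_blind1|apply cs_blind2
               |apply cs_pair1|apply cs_pair2|apply cs_enc1|apply cs_enc2]; assumption
        | exact I | auto]]]
    | ..]).
  all: try (match goal with
    | IH : subterm ?t _ -> forall g, subterm g ?u -> _, H1 : subterm ?gg ?u |- _ =>
        assert (Ht : subterm t a0) by (eapply subterm_trans; [|exact Ha0]; eauto);
        destruct (IH Ht _ H1 Hgg) as (g'&G1&G2&G3); exists g'; split; [eauto|auto]
    end; fail).
  all: try (exists gg; split; [eauto | split; auto]; fail).
  apply subterm_fn_inv in Hg. destruct Hg as [->|(w&Hw&Hgw)]; [contradiction|].
  apply in_app_or in Hw. destruct Hw as [Hw|[<-|Hw]].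
  - exists gg; repeat split; auto. eapply st_fn; eauto. apply in_or_app; auto.
  - assert (Ht : subterm t a0).
    { eapply subterm_trans; [|exact Ha0]. eapply st_fn; [|apply st_refl].
      apply in_or_app; right; left; auto. }
    destruct (IHctx_step Ht gg Hgw Hgg) as (g'&H1&H2&H3).
    exists g'; repeat split; auto. eapply st_fn; eauto. apply in_or_app; right; left; auto.
  - exists gg; repeat split; auto. eapply st_fn; eauto. apply in_or_app; right; right; auto.
Qed.

Lemma ac_root_guarded_sub a b : ac_root th a b ->
  (forall g, subterm g b -> guarded g -> subterm g a) /\
  (forall g, subterm g a -> guarded g -> subterm g b).
Proof.
  intros (o&_&[(x&y&->&->)|(x&y&z&->&->)]); split; intros gg Hg Hgg.
  all: apply subterm_fn_inv in Hg; destruct Hg as [->|(w&Hw&Hgw)]; [contradiction|].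
  all: simpl in Hw; repeat destruct Hw as [<-|Hw]; try contradiction.
  all: try (eapply st_fn; [|exact Hgw]; simpl; eauto 4; fail).
  all: try (apply subterm_fn_inv in Hgw; destruct Hgw as [->|(w'&Hw'&Hgw')]; [contradiction|];
    simpl in Hw'; repeat destruct Hw' as [<-|Hw']; try contradiction).
  all: try (eapply st_fn; [|exact Hgw']; simpl; eauto 4; fail).
  all: try (eapply st_fn; [|eapply st_fn; [|exact Hgw']]; simpl; eauto 4; fail).
  all: first
    [ solve [eapply st_fn with (u := Fn o [x; y]);
             [simpl; auto | eapply st_fn; [|eassumption]; simpl; auto]]
    | solve [eapply st_fn with (u := Fn o [y; z]);
             [simpl; auto | eapply st_fn; [|eassumption]; simpl; auto]] ].
Qed.

Definition guarded_from (G : list term) (u : term) := forall g, subterm g u -> guarded g ->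
  exists g0 B, In B G /\ subterm g0 B /\ ac_eq th g g0.

Lemma guarded_from_ac_step G a b :
  ctx_step (ac_root th) a b \/ ctx_step (ac_root th) b a -> guarded_from G a -> guarded_from G b.
Proof.
  intros Hs HI gg Hg Hgg.
  assert (Hsub : exists g', subterm g' a /\ guarded g' /\ ac_eq th gg g').
  { destruct Hs as [Hs|Hs].
    - apply (@ctx_step_guarded_sub (ac_root th) (ac_eq th) a (fun x => rst_refl _ _ x))
        with (a := a) (b := b); auto.
      + intros a' b' Hr _ g Hg' Hgg'. exists g; repeat split; auto.
        * apply (proj1 (ac_root_guarded_sub Hr)); auto.
        * apply rst_refl.
      + intros x y Hxy _ _. apply rst_sym, rst_step; auto.
    - apply ctx_step_flip in Hs.
      apply (@ctx_step_guarded_sub (fun x y => ac_root th y x) (ac_eq th) a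
               (fun x => rst_refl _ _ x))
        with (a := a) (b := b); auto.
      + intros a' b' Hr _ g Hg' Hgg'. exists g; repeat split; auto.
        * apply (proj2 (ac_root_guarded_sub Hr)); auto.
        * apply rst_refl.
      + intros x y Hxy _ _. apply ctx_step_flip in Hxy. apply rst_step; auto. }
  destruct Hsub as (g'&H1&H2&H3).
  destruct (HI g' H1 H2) as (g0&B&HB&Hs0&Hac). exists g0, B; repeat split; auto.
  eapply rst_trans; eauto.
Qed.

Lemma guarded_from_ac_eq G a b : ac_eq th a b -> guarded_from G a -> guarded_from G b.
Proof.
  intros H. apply clos_rst_rstn1_iff in H. induction H as [|y z Hyz Hn IH]; auto.
  intro Ha. apply guarded_from_ac_step with y; auto.
Qed.

(* A rule instance inside a term from [G] is impossible, as [G] is in normal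
   form; rule instances elsewhere only duplicate or erase subterms, by the
   variable condition on the rules. *)
Lemma guarded_from_rule_step G a b : Forall (good th) G ->
  ctx_step (rule_root th) a b -> guarded_from G a -> guarded_from G b.
Proof.
  destruct Hadm as (_&Hrules&_&_).
  intros HG Hs HI gg Hg Hgg.
  destruct (@ctx_step_guarded_sub (rule_root th) eq a (@eq_refl _)) with (a := a) (b := b) (g := gg)
    as (g'&H1&H2&<-); auto.
  - intros a' b' (l&r&s&Hin&->&->) _ g Hg' Hgg'.
    destruct (@inst_guarded_sub _ s r g Hg' Hgg') as (n&Hn&Hgn). exists g; repeat split; auto.
    eapply subterm_trans; [exact Hgn|]. apply pvar_sub. apply (Hrules _ _ Hin); auto.
  - intros x y Hxy Hgx Hxa. exfalso.
    destruct (HI x Hxa Hgx) as (g0&B&HB&Hs0&Hac).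
    assert (Hn : nf th g0).
    { rewrite Forall_forall in HG. apply (good_sub Hs0 (HG B HB)). }
    apply (nf_ac_eq Hn (rst_sym _ _ _ _ Hac)). exists y, x, y. repeat split; auto; apply rst_refl.
Qed.

Lemma guarded_from_rew_star G a b :
  Forall (good th) G -> rew_star th a b -> guarded_from G a -> guarded_from G b.
Proof.
  intros HG H. induction H as [x y (x'&y'&H1&H2&H3)| |]; auto.
  intro Hx. apply (guarded_from_ac_eq H3), (guarded_from_rule_step HG H2), (guarded_from_ac_eq H1).
  auto.
Qed.

Lemma guarded_from_egen G t : egen th G t -> guarded_from G t.
Proof.
  revert t. induction t using term_ind_nested; intros He gg Hg Hgg; inversion He; subst;
    try (match goal with H : In ?B G |- _ =>
           exists gg, B; repeat split; auto; apply rst_refl end; fail).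
  apply subterm_fn_inv in Hg. destruct Hg as [->|(w&Hw&Hgw)]; [contradiction|].
  rewrite Forall_forall in *. eapply H; eauto.
Qed.

Lemma id_cond_guarded_from G y :
  Forall (good th) G -> good th y -> id_cond th G y -> guarded_from G y.
Proof.
  intros HG [Hwy Hny] (t&He&Heq).
  assert (Hwt : wf th t).
  { apply (egen_wf (G := G)); auto. eapply Forall_impl; [|exact HG]. intros x Hx; apply Hx. }
  destruct (e_eq_joinable Hadm Hwy Hwt Heq) as (c&d&H1&H2&H3).
  apply nf_rew_star in H1; auto. subst c.
  apply (guarded_from_ac_eq (rst_sym _ _ _ _ H3)).
  eapply guarded_from_rew_star; eauto using guarded_from_egen.
Qed.

End GuardedSubterms.

Section Abstraction.
Variable S : Type.
Variable th : eqtheory S.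
Notation term := (term S).
Variable P : term -> Prop.
Hypothesis P_e_eq : forall x y, e_eq th x y -> P x -> P y.
Variable t0 : term.
Local Hint Constructors subterm : core.

(* Holes are guarded and E-steps only rewrite [Fn]-headed subterms, so [abstr]
   commutes with E-steps; as [P] is closed under E-equality, [abstr] is then a
   morphism for E-equality. *)
Fixpoint abstr (t : term) : term :=
  if excluded_middle_informative (guarded t /\ P t) then t0 else
  match t with
  | Name _ n => Name S n | Var _ n => Var S n | Pub a => Pub (abstr a)
  | Sign a b => Sign (abstr a) (abstr b) | Blind a b => Blind (abstr a) (abstr b)
  | Pair a b => Pair (abstr a) (abstr b) | Enc a b => Enc (abstr a) (abstr b)
  | Fn g l => Fn g (map abstr l)
  end.

Lemma abstr_hole u : guarded u -> P u -> abstr u = t0.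
Proof. intros H1 H2. destruct u; cbn [abstr]; destruct (excluded_middle_informative _); tauto. Qed.

Lemma abstr_fn g l : abstr (Fn g l) = Fn g (map abstr l).
Proof. cbn [abstr]. destruct (excluded_middle_informative _) as [[[] _]|_]; auto. Qed.

Lemma abstr_inst (s : nat -> term) p : abstr (inst s p) = inst (fun n => abstr (s n)) p.
Proof.
  induction p using pat_ind_nested; cbn [inst]; auto.
  rewrite abstr_fn. f_equal. rewrite map_map. apply map_ext_in. intros a Ha.
  rewrite Forall_forall in H; auto.
Qed.

Lemma hole_iff x y : e_eq th x y -> (guarded x <-> guarded y) ->
  (guarded x /\ P x <-> guarded y /\ P y).
Proof.
  intros H1 H2. split; intros [A B]; split; try tauto; eapply P_e_eq; eauto.
  apply rst_sym; auto.
Qed.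

Ltac abstr_congruence :=
  match goal with
  | |- abstr ?C1 = abstr ?C2 \/ _ =>
    cbn [abstr];
    destruct (excluded_middle_informative (guarded C1 /\ P C1)) as [h1|h1];
    destruct (excluded_middle_informative (guarded C2 /\ P C2)) as [h2|h2];
    [ left; auto
    | exfalso; apply h2; refine (proj1 (hole_iff _ _) h1); [|simpl; tauto]
    | exfalso; apply h1; refine (proj2 (hole_iff _ _) h2); [|simpl; tauto]
    | ]
  end.

Lemma abstr_e_step a b : e_step th a b -> abstr a = abstr b \/ e_step th (abstr a) (abstr b).
Proof.
  intro Hs. assert (He : e_eq th a b) by (apply rst_step; auto). revert He.
  induction Hs; intro He.
  1: { right. apply cs_root.
       destruct H as [(o&Ho&[(x&y&->&->)|(x&y&z&->&->)])|(l&r&s&Hin&->&->)].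
       - left. exists o; split; auto. left. exists (abstr x), (abstr y). rewrite !abstr_fn. auto.
       - left. exists o; split; auto. right. exists (abstr x), (abstr y), (abstr z).
         rewrite !abstr_fn. cbn [map]. rewrite !abstr_fn. auto.
       - right. exists l, r, (fun n => abstr (s n)). rewrite !abstr_inst. auto. }
  1-9: abstr_congruence; auto; destruct IHHs as [E|E];
    [ apply rst_step; auto | left; congruence
    | right; first [apply cs_pub|apply cs_sign1|apply cs_sign2|apply cs_blind1|apply cs_blind2
                   |apply cs_pair1|apply cs_pair2|apply cs_enc1|apply cs_enc2]; auto ].
  rewrite !abstr_fn, !map_app. simpl. destruct IHHs as [E|E];
    [apply rst_step; auto | left; congruence | right; apply cs_fn; auto].
Qed.

Lemma abstr_e_eq a b : e_eq th a b -> e_eq th (abstr a) (abstr b).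
Proof. apply rst_map. apply abstr_e_step. Qed.

Lemma abstr_id t : (forall u, subterm u t -> guarded u -> ~ P u) -> abstr t = t.
Proof.
  induction t using term_ind_nested; intro Hsb; cbn [abstr];
    (destruct (excluded_middle_informative _) as [[h1 h2]|_];
     [exfalso; eapply Hsb; [apply st_refl | auto | auto] |]).
  all: f_equal; auto.
  all: try (match goal with IH : _ -> abstr ?x = ?x |- abstr ?x = ?x =>
              apply IH; intros; apply Hsb; auto; eauto end).
  rewrite <- map_id. apply map_ext_in. rewrite Forall_forall in *. intros x Hx.
  apply H; auto. intros; eapply Hsb; eauto.
Qed.

Lemma abstr_egen G L t : egen th (G ++ L) t ->
  (forall g, In g G -> abstr g = g) -> (forall x, In x L -> abstr x = t0) ->
  egen th G t0 -> egen th G (abstr t).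
Proof.
  intros He HG HL H0. revert He. induction t using term_ind_nested; intro He; inversion He; subst.
  all: try (match goal with Hi : In _ (_ ++ _) |- _ =>
              apply in_app_or in Hi; destruct Hi as [Hi|Hi];
       [rewrite HG; auto; constructor; auto | rewrite HL; auto] end).
  rewrite abstr_fn. apply eg_fn; [rewrite length_map; auto|].
  rewrite Forall_forall in *. intros x Hx. apply in_map_iff in Hx. destruct Hx as (y&<-&Hy). auto.
Qed.

End Abstraction.

Section Normalization.
Variable S : Type.
Variable th : eqtheory S.
Notation term := (term S).
Notation ctx := (ctx S).
Hypothesis Hadm : admissible th.
Notation good := (good th).
Local Hint Constructors subterm : core.

Lemma admissible_lhs_fn : forall l r, In (l, r) (rules th) -> exists g ps, l = PF g ps.
Proof. destruct Hadm as (_&H&_). intros l r Hin. apply (H _ _ Hin). Qed.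

(* [Synth]: derivations built from (id) and right rules only.  [Norm]: normal
   derivations, i.e. left rules, each with a [Synth] left premise when
   branching, on top of a [Synth] derivation. *)
Inductive Synth : ctx -> term -> Prop :=
| Synth_id G T : good_seq th G T -> id_cond th G T -> Synth G T
| Synth_pair G M N : good_seq th G (Pair M N) -> Synth G M -> Synth G N -> Synth G (Pair M N)
| Synth_enc G M K : good_seq th G (Enc M K) -> Synth G M -> Synth G K -> Synth G (Enc M K)
| Synth_sign G M K : good_seq th G (Sign M K) -> Synth G M -> Synth G K -> Synth G (Sign M K)
| Synth_blind G M K :
    good_seq th G (Blind M K) -> Synth G M -> Synth G K -> Synth G (Blind M K).

Inductive Norm : ctx -> term -> Prop :=
| Norm_synth G T : Synth G T -> Norm G T
| Norm_pL G M N T : good_seq th G T -> In (Pair M N) G -> Norm (M :: N :: G) T -> Norm G T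
| Norm_signL G M K L N : good_seq th G N -> In (Sign M K) G -> In (Pub L) G -> ac_eq th K L ->
    Norm (M :: G) N -> Norm G N
| Norm_eL G M K N :
    good_seq th G N -> In (Enc M K) G -> Synth G K -> Norm (M :: K :: G) N -> Norm G N
| Norm_blindL1 G M K N :
    good_seq th G N -> In (Blind M K) G -> Synth G K -> Norm (M :: K :: G) N -> Norm G N
| Norm_blindL2 G M R K N : good_seq th G N -> In (Sign (Blind M R) K) G -> Synth G R ->
    Norm (Sign M K :: R :: G) N -> Norm G N
| Norm_gs G A M : good_seq th G M -> (exists B, In B (M :: G) /\ subterm A B) -> guarded A ->
    Synth G A -> Norm (A :: G) M -> Norm G M.

Lemma Synth_good G T : Synth G T -> good_seq th G T.
Proof. destruct 1; auto. Qed.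

Lemma Norm_good G T : Norm G T -> good_seq th G T.
Proof. destruct 1; auto. apply Synth_good; auto. Qed.

Lemma Synth_weaken G T : Synth G T -> forall G', incl G G' -> Forall good G' -> Synth G' T.
Proof.
  induction 1; intros G' Hi HG; apply good_seq_iff in H; destruct H as [H H'].
  1: apply Synth_id; [apply good_seq_iff; auto | eapply id_cond_mono; eauto].
  all: econstructor; [apply good_seq_iff; auto | auto | auto].
Qed.

Lemma Norm_weaken G T : Norm G T -> forall G', incl G G' -> Forall good G' -> Norm G' T.
Proof.
  induction 1 as [G T Hs|G M N T Hg Hin HN IH|G M K L N Hg Hin HinL HKL HN IH
                 |G M K N Hg Hin HsK HN IH|G M K N Hg Hin HsK HN IH
                 |G M R K N Hg Hin HsR HN IH|G A M Hg (B&HB&HAB) HgA HsA HN IH];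
    intros G' Hi HG'.
  - apply Norm_synth; eapply Synth_weaken; eauto.
  - apply Norm_pL with M N; eauto using good_seq_weaken.
    apply (IH (M :: N :: G')); [apply (incl_app_app (incl_refl [M; N]) Hi) |].
    apply (good_prefix_weaken [M; N] _ (Norm_good HN) HG').
  - apply Norm_signL with M K L; eauto using good_seq_weaken.
    apply (IH (M :: G')); [apply (incl_app_app (incl_refl [M]) Hi) |].
    apply (good_prefix_weaken [M] _ (Norm_good HN) HG').
  - apply Norm_eL with M K; eauto using good_seq_weaken, Synth_weaken.
    apply (IH (M :: K :: G')); [apply (incl_app_app (incl_refl [M; K]) Hi) |].
    apply (good_prefix_weaken [M; K] _ (Norm_good HN) HG').
  - apply Norm_blindL1 with M K; eauto using good_seq_weaken, Synth_weaken.
    apply (IH (M :: K :: G')); [apply (incl_app_app (incl_refl [M; K]) Hi) |].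
    apply (good_prefix_weaken [M; K] _ (Norm_good HN) HG').
  - apply Norm_blindL2 with M R K; eauto using good_seq_weaken, Synth_weaken.
    apply (IH (Sign M K :: R :: G')); [apply (incl_app_app (incl_refl [Sign M K; R]) Hi) |].
    apply (good_prefix_weaken [Sign M K; R] _ (Norm_good HN) HG').
  - apply Norm_gs with A; eauto using good_seq_weaken, Synth_weaken.
    + exists B; split; auto. destruct HB as [<-|HB]; simpl; auto.
    + apply (IH (A :: G')); [apply (incl_app_app (incl_refl [A]) Hi) |].
      apply (good_prefix_weaken [A] _ (Norm_good HN) HG').
Qed.

Lemma Synth_ac_eq G T : Synth G T -> forall T', ac_eq th T T' -> good T' -> Synth G T'.
Proof.
  induction 1; intros T' Hac HT'; apply good_seq_iff in H; destruct H as [HT HG].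
  1: { apply Synth_id; [apply good_seq_iff; auto |].
       destruct H0 as (u&H1&H2). exists u; split; auto.
       eapply rst_trans; [apply rst_sym, ac_eq_e_eq; eauto | auto]. }
  1: destruct (ac_eq_pair_inv Hac) as (a'&b'&->&Ha1&Ha2).
  2: destruct (ac_eq_enc_inv Hac) as (a'&b'&->&Ha1&Ha2).
  3: destruct (ac_eq_sign_inv Hac) as (a'&b'&->&Ha1&Ha2).
  4: destruct (ac_eq_blind_inv Hac) as (a'&b'&->&Ha1&Ha2).
  all: constructor; [apply good_seq_iff; auto | apply IHSynth1; auto | apply IHSynth2; auto].
  all: eapply good_sub; [|exact HT']; auto.
Qed.

Lemma Synth_e_eq G T T' : Synth G T -> e_eq th T T' -> good T' -> Synth G T'.
Proof.
  intros H He HT'. apply (Synth_ac_eq H); auto.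
  apply good_e_eq_ac_eq; auto. apply (good_seq_concl (Synth_good H)).
Qed.

Lemma Synth_in_ac_eq G x y : In y G -> ac_eq th x y -> Forall good G -> good x -> Synth G x.
Proof.
  intros Hy Hxy HG Hx. apply Synth_id; [apply good_seq_iff; auto |].
  eapply id_cond_in; eauto. apply ac_eq_e_eq; auto.
Qed.

Lemma id_cond_guarded_origin G x : Forall good G -> good x -> guarded x -> id_cond th G x ->
  exists A0 B, In B G /\ subterm A0 B /\ ac_eq th x A0.
Proof. intros HG Hx Hgx Hid. eapply id_cond_guarded_from; eauto. Qed.

Lemma Norm_gs_id G T A B : Forall good G -> good T -> In B G -> subterm A B -> guarded A ->
  id_cond th G A -> Norm (A :: G) T -> Norm G T.
Proof.
  intros HG HT HB HAB HgA Hid HN. apply Norm_gs with A; auto.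
  - apply good_seq_iff; auto.
  - exists B; split; simpl; auto.
  - apply Synth_id; auto. apply good_seq_iff; split; auto.
    eapply good_sub; eauto. eapply Forall_good_in; eauto.
Qed.

(* The left rules of a normal derivation of [K] only enlarge the context, so
   they can be moved below any use of [K], as long as [K] is a subterm of the
   sequent (this keeps (gs) applicable). *)
Lemma Norm_lift G K : Norm G K -> forall T, good T -> (exists B, In B (T :: G) /\ subterm K B) ->
  (forall G', incl G G' -> Forall good G' -> Synth G' K -> Norm G' T) -> Norm G T.
Proof.
  induction 1 as [G K Hs|G M N K Hg Hin HN IH|G M K' L K Hg Hin HinL HKL HN IH
                 |G M K' K Hg Hin HsK HN IH|G M K' K Hg Hin HsK HN IH
                 |G M R K' K Hg Hin HsR HN IH|G A K Hg HA HgA HsA HN IH];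
    intros T HT (B&HB&HKB) Hk;
    [ apply Hk; auto using incl_refl; apply (good_seq_ctx (Synth_good Hs))
    | apply Norm_pL with M N | apply Norm_signL with M K' L
    | apply Norm_eL with M K' | apply Norm_blindL1 with M K'
    | apply Norm_blindL2 with M R K' | apply Norm_gs with A ];
    try (apply good_seq_iff; split; [auto | apply (good_seq_ctx Hg)]); auto.
  all: try (destruct HA as (B'&[<-|HB']&HAB');
            [exists B; split; auto; eapply subterm_trans; eauto | exists B'; split; simpl; auto]).
  all: apply IH; auto; [exists B; split; auto; destruct HB as [->|HB]; simpl; auto |].
  all: intros G' Hi HG'; apply Hk; auto; intros z Hz; apply Hi; simpl; auto.
Qed.

Lemma Norm_right (c : term -> term -> term)
  (Synth_c : forall G M N, good_seq th G (c M N) -> Synth G M -> Synth G N -> Synth G (c M N))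
  (c_sub : forall M N, subterm M (c M N) /\ subterm N (c M N)) :
  forall G M N, Norm G M -> Norm G N -> good (c M N) -> Norm G (c M N).
Proof.
  intros G M N HM HN Hg. destruct (c_sub M N) as [H1 H2].
  apply (Norm_lift HM); auto. { exists (c M N); split; simpl; auto. }
  intros G' Hi HG' HsM. apply (Norm_lift (Norm_weaken HN Hi HG')); auto.
  { exists (c M N); split; simpl; auto. }
  intros G'' Hi' HG'' HsN. apply Norm_synth, Synth_c; auto.
  - apply good_seq_iff; auto.
  - eapply Synth_weaken; eauto.
Qed.

Definition available G x := In x G \/ Synth G x.
Definition syn_extends G D := forall x, In x D -> available G x.

Lemma Synth_id_or_guarded G x : Synth G x -> id_cond th G x \/ guarded x.
Proof. destruct 1; simpl; auto. Qed.

Lemma syn_extends_split G D : syn_extends G D ->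
  exists L, (forall x, In x L -> Synth G x /\ guarded x) /\
            (forall x, In x D -> In x L \/ id_cond th G x).
Proof.
  induction D as [|x D IH]; intro Hx.
  - exists []; split; intros ? [].
  - destruct IH as (L&H1&H2). { intros y Hy; apply Hx; simpl; auto. }
    destruct (Hx x (or_introl eq_refl)) as [Hin|Hs].
    + exists L; split; auto. intros y [<-|Hy]; auto.
      right. eapply id_cond_in; [exact Hin | apply rst_refl].
    + destruct (Synth_id_or_guarded Hs) as [Hid|Hg].
      * exists L; split; auto. intros y [<-|Hy]; auto.
      * exists (x :: L); split.
        -- intros y [<-|Hy]; auto.
        -- intros y [<-|Hy]; simpl; auto. destruct (H2 y Hy); auto.
Qed.

Lemma Synth_egen_nonempty G x : Synth G x -> exists t0, egen th G t0.
Proof. induction 1; auto. destruct H0 as (u&?&?); eauto. Qed.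

(* Abstract every hole from [L] to [t0] all along the E-proof. *)
Lemma id_cond_abstract G L T t t0 :
  (forall x, In x L -> guarded x) -> egen th G t0 ->
  (forall x B A, In x L -> In B (T :: G) -> subterm A B -> guarded A -> ~ e_eq th A x) ->
  egen th (G ++ L) t -> e_eq th T t -> id_cond th G T.
Proof.
  intros HgL Ht0 Hno He Heq.
  set (P := fun u => exists x, In x L /\ e_eq th u x).
  assert (HP : forall a b, e_eq th a b -> P a -> P b).
  { intros a b Hab (x&Hx&Hax). exists x; split; auto.
    eapply rst_trans; eauto. apply rst_sym; auto. }
  assert (Hnot : forall B u, In B (T :: G) -> subterm u B -> guarded u -> ~ P u).
  { intros B u HB Hu Hgu (x&Hx&Hux). eapply Hno; eauto. }
  assert (Hid : forall B, In B (T :: G) -> abstr P t0 B = B).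
  { intros B HB. apply abstr_id. intros u Hu Hgu. eapply Hnot; eauto. }
  exists (abstr P t0 t). split.
  - eapply abstr_egen; eauto.
    + intros g Hg. apply Hid; simpl; auto.
    + intros x Hx. apply abstr_hole; auto. exists x; split; auto. apply rst_refl.
  - rewrite <- (Hid T) by (simpl; auto). apply abstr_e_eq; auto.
Qed.

Lemma id_cond_replace_hole G L1 L2 x A t : e_eq th A x -> egen th (G ++ L1 ++ x :: L2) t ->
  id_cond th ((A :: G) ++ L1 ++ L2) t.
Proof.
  intros HAx He. eapply id_cond_egen; eauto. intros y Hy.
  rewrite !in_app_iff in Hy. simpl in Hy.
  destruct Hy as [Hy|[Hy|[<-|Hy]]];
    [ eapply id_cond_in with (y := y); [simpl; rewrite !in_app_iff; tauto | apply rst_refl]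
    | eapply id_cond_in with (y := y); [simpl; rewrite !in_app_iff; tauto | apply rst_refl]
    | eapply id_cond_in with (y := A); [simpl; auto | apply rst_sym; auto]
    | eapply id_cond_in with (y := y); [simpl; rewrite !in_app_iff; tauto | apply rst_refl] ].
Qed.

(* Cut of synthesized guarded terms [L] into an axiom: a hole with an E-equal
   guarded subterm [A] in the sequent is traded for [A] via (gs); once none is
   left, [id_cond_abstract] applies. *)
Lemma Norm_id_cut n : forall L G T t, length L <= n -> Forall good G -> good T ->
  egen th (G ++ L) t -> e_eq th T t -> (forall x, In x L -> Synth G x /\ guarded x) -> Norm G T.
Proof.
  induction n as [|n IHn]; intros L G T t Hlen HG HT He Heq HL.
  all: destruct L as [|x0 L0];
    [apply Norm_synth, Synth_id;
       [apply good_seq_iff; auto | exists t; rewrite app_nil_r in He; auto] |].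
  1: simpl in Hlen; lia.
  destruct (classic (exists x B A, In x (x0 :: L0) /\ In B (T :: G) /\ subterm A B /\
                                   guarded A /\ e_eq th A x))
    as [(x&B&A&Hx&HB&HAB&HgA&HeA)|Hno].
  - assert (HgA' : good A).
    { eapply good_sub; eauto. destruct HB as [<-|HB]; auto. eapply Forall_good_in; eauto. }
    assert (HsA : Synth G A).
    { destruct (HL x Hx) as [Hs _]. eapply Synth_e_eq; eauto. apply rst_sym; auto. }
    destruct (in_split _ _ Hx) as (L1&L2&EL). rewrite EL in *.
    destruct (@id_cond_replace_hole G L1 L2 x A t HeA He) as (u&Hu1&Hu2).
    apply Norm_gs with A; auto.
    + apply good_seq_iff; auto.
    + exists B; split; auto.
    + apply IHn with (L := L1 ++ L2) (t := u); auto.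
      * rewrite length_app in *; simpl in *; lia.
      * eapply rst_trans; [exact Heq | exact Hu2].
      * intros y Hy. destruct (HL y) as [Hy1 Hy2]; [rewrite in_app_iff in *; simpl; tauto |].
        split; auto. eapply Synth_weaken; eauto. intros z Hz; simpl; auto.
  - destruct (HL x0 (or_introl eq_refl)) as [Hs0 _]. destruct (Synth_egen_nonempty Hs0) as (t0&Ht0).
    apply Norm_synth, Synth_id; [apply good_seq_iff; auto |].
    apply id_cond_abstract with (x0 :: L0) t t0; auto.
    + intros x Hx; apply HL; auto.
    + intros x B A Hx HB HAB HgA HeA. apply Hno. exists x, B, A; auto.
Qed.

Definition normal_over D T := forall G, Forall good G -> syn_extends G D -> Norm G T.

Lemma Synth_normal_over D T : Synth D T -> normal_over D T.
Proof.
  induction 1; intros G' HG' HE; pose proof (good_seq_concl H) as HT.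
  - destruct (syn_extends_split HE) as (L&HL1&HL2).
    destruct H0 as (u&Hu1&Hu2).
    destruct (id_cond_egen (D' := G' ++ L) Hu1) as (u'&Hu'1&Hu'2).
    { intros y Hy. destruct (HL2 y Hy) as [HyL|Hid].
      - eapply id_cond_in with (y := y); [rewrite in_app_iff; auto | apply rst_refl].
      - eapply id_cond_mono; [|exact Hid]. intros z Hz; rewrite in_app_iff; auto. }
    apply Norm_id_cut with (n := length L) (L := L) (t := u'); auto. eapply rst_trans; eauto.
  - apply Norm_right; auto. intros; apply Synth_pair; auto.
  - apply Norm_right; auto. intros; apply Synth_enc; auto.
  - apply Norm_right; auto. intros; apply Synth_sign; auto.
  - apply Norm_right; auto. intros; apply Synth_blind; auto.
Qed.

Lemma syn_extends_weaken G G' D :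
  syn_extends G D -> incl G G' -> Forall good G' -> syn_extends G' D.
Proof.
  intros HE Hi HG x Hx.
  destruct (HE x Hx) as [H|H]; [left; auto | right; eapply Synth_weaken; eauto].
Qed.

Lemma syn_extends_cons G D x : available G x -> syn_extends G D -> syn_extends G (x :: D).
Proof. intros H HE y [<-|Hy]; auto. Qed.

Lemma Synth_guarded_sub G B A : Synth G B -> subterm A B -> guarded A ->
  Synth G A \/ exists A1 B1, In B1 G /\ subterm A1 B1 /\ ac_eq th A A1.
Proof.
  intros H. revert A. induction H; intros A HAB HgA.
  1: { apply good_seq_iff in H. destruct H as [HT HG]. right.
       eapply id_cond_guarded_from; eauto. }
  all: inversion HAB; subst;
    [left; first [apply Synth_pair|apply Synth_enc|apply Synth_sign|apply Synth_blind]; auto | |];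
    eauto.
Qed.

Lemma Synth_pair_inv G M K :
  Synth G (Pair M K) -> (Synth G M /\ Synth G K) \/ id_cond th G (Pair M K).
Proof. inversion 1; auto. Qed.
Lemma Synth_enc_inv G M K : Synth G (Enc M K) -> (Synth G M /\ Synth G K) \/ id_cond th G (Enc M K).
Proof. inversion 1; auto. Qed.
Lemma Synth_sign_inv G M K :
  Synth G (Sign M K) -> (Synth G M /\ Synth G K) \/ id_cond th G (Sign M K).
Proof. inversion 1; auto. Qed.
Lemma Synth_blind_inv G M K :
  Synth G (Blind M K) -> (Synth G M /\ Synth G K) \/ id_cond th G (Blind M K).
Proof. inversion 1; auto. Qed.

Lemma Norm_lift_synth D G K T : Synth D K -> Forall good G -> syn_extends G D -> good T ->
  (exists B, In B G /\ subterm K B) ->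
  (forall G', incl G G' -> Forall good G' -> Synth G' K -> Norm G' T) -> Norm G T.
Proof.
  intros HsK HG HE HT (B&HB&HKB) Hk. apply (Norm_lift (Synth_normal_over HsK HG HE)); auto.
  exists B; split; simpl; auto.
Qed.

Section Available.
Variable c : term -> term -> term.
Hypothesis Synth_c_inv :
  forall G M K, Synth G (c M K) -> (Synth G M /\ Synth G K) \/ id_cond th G (c M K).
Hypothesis ac_eq_c_inv : forall M K t, ac_eq th (c M K) t ->
  exists M' K', t = c M' K' /\ ac_eq th M M' /\ ac_eq th K K'.
Hypothesis c_guarded : forall M K, guarded (c M K).
Hypothesis c_sub : forall M K, subterm M (c M K) /\ subterm K (c M K).

(* An available [c M K] is either synthesized from its components, or
   AC-equal to a subterm of the context, which (gs) then adds to it. *)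
Lemma Norm_available G M K T : available G (c M K) -> Forall good G -> good T -> good (c M K) ->
  (Synth G M -> Synth G K -> Norm G T) ->
  (forall G1 M1 K1, incl G G1 -> Forall good G1 -> In (c M1 K1) G1 ->
     ac_eq th M M1 -> ac_eq th K K1 -> Norm G1 T) ->
  Norm G T.
Proof.
  intros Hav HG HT HcMK Hsynth Hin. destruct Hav as [HinG|Hs].
  - apply Hin with M K; auto using incl_refl; apply rst_refl.
  - destruct (Synth_c_inv Hs) as [[HsM HsK]|Hid]; auto.
    destruct (id_cond_guarded_origin HG HcMK (c_guarded M K) Hid) as (A0&B&HB&HAB&Hac0).
    destruct (ac_eq_c_inv Hac0) as (M1&K1&->&H1&H2).
    apply Norm_gs_id with (c M1 K1) B; auto.
    + destruct Hid as (u&Hu1&Hu2). exists u; split; auto.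
      eapply rst_trans; [apply rst_sym, ac_eq_e_eq; eauto | exact Hu2].
    + apply Hin with M1 K1; simpl; auto.
      * intros z Hz; simpl; auto.
      * constructor; auto. eapply good_sub; eauto. eapply Forall_good_in; eauto.
Qed.

Hypothesis Norm_c_left : forall G M K N,
  good_seq th G N -> In (c M K) G -> Synth G K -> Norm (M :: K :: G) N -> Norm G N.

Lemma normal_over_keyed D M K N : In (c M K) D -> Synth D K ->
  good_seq th (M :: K :: D) N -> normal_over (M :: K :: D) N -> normal_over D N.
Proof.
  intros Hin HsK Hg IH G0 HG0 HE.
  assert (HcMK : good (c M K)) by (eapply good_seq_in; [exact Hg | simpl; auto]).
  assert (HM : good M) by (eapply good_seq_in; [exact Hg | simpl; auto]).
  assert (HK : good K) by (eapply good_seq_in; [exact Hg | simpl; auto]).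
  pose proof (good_seq_concl Hg) as HN.
  apply (@Norm_available G0 M K N); auto.
  - intros HsM HsK0. apply IH; auto. repeat apply syn_extends_cons; auto; right; auto.
  - intros G1 M1 K1 Hi HG1 Hin1 Ha1 Ha2.
    assert (Hc1 : good (c M1 K1)) by (eapply Forall_good_in; eauto).
    destruct (c_sub M1 K1) as [HM1 HK1].
    assert (HsK1 : Synth D K1) by (apply Synth_ac_eq with K; eauto using good_sub).
    apply (Norm_lift_synth HsK1 HG1 (syn_extends_weaken HE Hi HG1)); auto.
    { exists (c M1 K1); split; auto. }
    intros G' Hi' HG' HsK1'.
    assert (HG'' : Forall good (M1 :: K1 :: G'))
      by (constructor; [|constructor]; eauto using good_sub).
    apply Norm_c_left with M1 K1; auto. apply good_seq_iff; auto.
    apply IH; auto.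
    apply syn_extends_cons; [right; apply Synth_in_ac_eq with M1; simpl; auto |].
    apply syn_extends_cons; [right; apply Synth_in_ac_eq with K1; simpl; auto |].
    eapply syn_extends_weaken; eauto. intros z Hz; simpl; auto.
Qed.

End Available.

Lemma Norm_available_pub G L T : available G (Pub L) -> Forall good G -> good T -> good (Pub L) ->
  (forall G1 L1, incl G G1 -> Forall good G1 -> In (Pub L1) G1 -> ac_eq th L L1 -> Norm G1 T) ->
  Norm G T.
Proof.
  intros Hav HG HT HL Hin. destruct Hav as [HinG|Hs].
  - apply Hin with L; auto using incl_refl; apply rst_refl.
  - assert (Hid : id_cond th G (Pub L)) by (inversion Hs; subst; auto).
    destruct (id_cond_guarded_origin HG HL I Hid) as (A0&B&HB&HAB&Hac0).
    destruct (ac_eq_pub_inv Hac0) as (L1&->&H1).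
    apply Norm_gs_id with (Pub L1) B; auto.
    + exact I.
    + destruct Hid as (u&Hu1&Hu2). exists u; split; auto.
      eapply rst_trans; [apply rst_sym, ac_eq_e_eq; eauto | exact Hu2].
    + apply Hin with L1; simpl; auto.
      * intros z Hz; simpl; auto.
      * constructor; auto. eapply good_sub; eauto. eapply Forall_good_in; eauto.
Qed.

Lemma normal_over_pL D M N T : In (Pair M N) D ->
  good_seq th (M :: N :: D) T -> normal_over (M :: N :: D) T -> normal_over D T.
Proof.
  intros Hin Hg IH G0 HG0 HE.
  assert (HP : good (Pair M N)) by (eapply good_seq_in; [exact Hg | simpl; auto]).
  assert (HM : good M) by (eapply good_seq_in; [exact Hg | simpl; auto]).
  assert (HN : good N) by (eapply good_seq_in; [exact Hg | simpl; auto]).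
  pose proof (good_seq_concl Hg) as HT.
  apply (@Norm_available (@Pair S) Synth_pair_inv (@ac_eq_pair_inv S th) (fun _ _ => I)
           G0 M N T); auto.
  - intros HsM HsN. apply IH; auto. repeat apply syn_extends_cons; auto; right; auto.
  - intros G1 M1 N1 Hi HG1 Hin1 Ha1 Ha2.
    assert (HP1 : good (Pair M1 N1)) by (eapply Forall_good_in; eauto).
    assert (HG' : Forall good (M1 :: N1 :: G1))
      by (constructor; [|constructor]; eauto using good_sub).
    apply Norm_pL with M1 N1; auto. apply good_seq_iff; auto.
    apply IH; auto.
    apply syn_extends_cons; [right; apply Synth_in_ac_eq with M1; simpl; auto |].
    apply syn_extends_cons; [right; apply Synth_in_ac_eq with N1; simpl; auto |].
    eapply syn_extends_weaken; eauto. intros z Hz; simpl; auto.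
Qed.

Lemma normal_over_signL D M K L N : In (Sign M K) D -> In (Pub L) D -> ac_eq th K L ->
  good_seq th (M :: D) N -> normal_over (M :: D) N -> normal_over D N.
Proof.
  intros Hin HinL HKL Hg IH G0 HG0 HE.
  assert (HS : good (Sign M K)) by (eapply good_seq_in; [exact Hg | simpl; auto]).
  assert (HPL : good (Pub L)) by (eapply good_seq_in; [exact Hg | simpl; auto]).
  assert (HM : good M) by (eapply good_seq_in; [exact Hg | simpl; auto]).
  pose proof (good_seq_concl Hg) as HN.
  apply (@Norm_available (@Sign S) Synth_sign_inv (@ac_eq_sign_inv S th) (fun _ _ => I)
           G0 M K N); auto.
  - intros HsM _. apply IH; auto. apply syn_extends_cons; auto; right; auto.
  - intros G1 M1 K1 Hi HG1 Hin1 Ha1 Ha2.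
    apply (@Norm_available_pub G1 L N); auto.
    { destruct (HE _ HinL) as [Hx|Hx]; [left; auto | right; eapply Synth_weaken; eauto]. }
    intros G2 L1 Hi2 HG2 HinP2 HL1.
    assert (HS1 : good (Sign M1 K1)) by (eapply Forall_good_in; eauto).
    assert (HG' : Forall good (M1 :: G2)) by (constructor; eauto using good_sub).
    apply Norm_signL with M1 K1 L1; auto.
    + apply good_seq_iff; auto.
    + apply rst_trans with K; [apply rst_sym; exact Ha2 |]. apply rst_trans with L; auto.
    + apply IH; auto.
      apply syn_extends_cons; [right; apply Synth_in_ac_eq with M1; simpl; auto |].
      eapply syn_extends_weaken; eauto. intros z Hz; simpl; auto.
Qed.

Section BlindL2.
Variables (D : ctx) (M R K N : term).
Hypothesis HsR : Synth D R.
Hypothesis Hg : good_seq th (Sign M K :: R :: D) N.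
Hypothesis IH : normal_over (Sign M K :: R :: D) N.

Lemma normal_over_blindL2_unblind G1 M1 R1 : Forall good G1 -> syn_extends G1 D -> Synth G1 K ->
  In (Blind M1 R1) G1 -> ac_eq th M M1 -> ac_eq th R R1 -> Norm G1 N.
Proof.
  intros HG1 HE HsK Hin1 Ha1 Ha2. pose proof (good_seq_concl Hg) as HN.
  assert (HR : good R) by (eapply good_seq_in; [exact Hg | simpl; auto]).
  assert (HB1 : good (Blind M1 R1)) by (eapply Forall_good_in; eauto).
  assert (HsR1 : Synth D R1) by (apply Synth_ac_eq with R; eauto using good_sub).
  apply (Norm_lift_synth HsR1 HG1 HE); auto.
  { exists (Blind M1 R1); split; auto. }
  intros G' Hi' HG' HsR1'.
  assert (HG'' : Forall good (M1 :: R1 :: G'))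
    by (constructor; [|constructor]; eauto using good_sub).
  assert (HSMK : good (Sign M K)) by (eapply good_seq_in; [exact Hg | simpl; auto]).
  apply Norm_blindL1 with M1 R1; auto. { apply good_seq_iff; auto. }
  apply IH; auto.
  apply syn_extends_cons.
  { right. apply Synth_sign; [apply good_seq_iff; auto | |].
    - apply Synth_in_ac_eq with M1; simpl; eauto using good_sub.
    - eapply Synth_weaken; eauto. intros z Hz; simpl; auto. }
  apply syn_extends_cons; [right; apply Synth_in_ac_eq with R1; simpl; auto |].
  eapply syn_extends_weaken; eauto. intros z Hz; simpl; auto.
Qed.

Lemma normal_over_blindL2_resign G1 M1 R1 K1 : Forall good G1 -> syn_extends G1 D ->
  In (Sign (Blind M1 R1) K1) G1 -> ac_eq th M M1 -> ac_eq th R R1 -> ac_eq th K K1 -> Norm G1 N.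
Proof.
  pose proof admissible_lhs_fn as Hlhs.
  intros HG1 HE Hin1 HM1 HR1 HK1. pose proof (good_seq_concl Hg) as HN.
  assert (HSMK : good (Sign M K)) by (eapply good_seq_in; [exact Hg | simpl; auto]).
  assert (HR : good R) by (eapply good_seq_in; [exact Hg | simpl; auto]).
  assert (HX1 : good (Sign (Blind M1 R1) K1)) by (eapply Forall_good_in; eauto).
  assert (HBl1 : good (Blind M1 R1)) by (eapply good_sub; [|exact HX1]; auto).
  assert (HsR1 : Synth D R1) by (apply Synth_ac_eq with R; eauto using good_sub).
  apply (Norm_lift_synth HsR1 HG1 HE); auto.
  { exists (Sign (Blind M1 R1) K1); split; auto. }
  intros G' Hi' HG' HsR1'.
  assert (HG'' : Forall good (Sign M1 K1 :: R1 :: G')).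
  { constructor; [apply good_sign; eauto using good_sub | constructor; eauto using good_sub]. }
  apply Norm_blindL2 with M1 R1 K1; auto. { apply good_seq_iff; auto. }
  apply IH; auto.
  apply syn_extends_cons.
  { right. apply Synth_in_ac_eq with (Sign M1 K1); simpl; auto. apply cong_sign; auto. }
  apply syn_extends_cons; [right; apply Synth_in_ac_eq with R1; simpl; auto |].
  eapply syn_extends_weaken; eauto. intros z Hz; simpl; auto.
Qed.

Lemma normal_over_blindL2 : In (Sign (Blind M R) K) D -> normal_over D N.
Proof.
  pose proof admissible_lhs_fn as Hlhs.
  intros Hin G0 HG0 HE.
  assert (HX : good (Sign (Blind M R) K)) by (eapply good_seq_in; [exact Hg | simpl; auto]).
  assert (HBl : good (Blind M R)) by (eapply good_sub; [|exact HX]; auto).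
  assert (HM : good M) by (eapply good_sub; [|exact HBl]; auto).
  assert (HR : good R) by (eapply good_sub; [|exact HBl]; auto).
  assert (HK : good K) by (eapply good_sub; [|exact HX]; auto).
  pose proof (good_seq_concl Hg) as HN.
  apply (@Norm_available (@Sign S) Synth_sign_inv (@ac_eq_sign_inv S th) (fun _ _ => I)
           G0 (Blind M R) K N); auto.
  - intros HsB HsK.
    assert (Hav : available G0 (Blind M R)) by (right; exact HsB).
    apply (@Norm_available (@Blind S) Synth_blind_inv (@ac_eq_blind_inv S th) (fun _ _ => I)
             G0 M R N); auto.
    + intros HsM HsR0. apply IH; auto.
      apply syn_extends_cons;
        [right; apply Synth_sign; auto; apply good_seq_iff; auto using good_sign |].
      apply syn_extends_cons; auto; right; auto.
    + intros G1 M1 R1 Hi HG1 Hin1 Ha1 Ha2. apply normal_over_blindL2_unblind with M1 R1; auto.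
      * eapply syn_extends_weaken; eauto.
      * eapply Synth_weaken; eauto.
  - intros G1 B1 K1 Hi HG1 Hin1 Ha1 Ha2.
    destruct (ac_eq_blind_inv Ha1) as (M1&R1&->&HM1&HR1).
    apply normal_over_blindL2_resign with M1 R1 K1; auto. eapply syn_extends_weaken; eauto.
Qed.

End BlindL2.

Lemma normal_over_gs D A M : (exists B, In B (M :: D) /\ subterm A B) -> guarded A -> Synth D A ->
  good_seq th (A :: D) M -> normal_over (A :: D) M -> normal_over D M.
Proof.
  intros (B&HB&HAB) HgA HsA Hg IH G0 HG0 HE.
  pose proof (good_seq_concl Hg) as HM.
  assert (HA : good A) by (eapply good_seq_in; [exact Hg | simpl; auto]).
  assert (Hcase : (exists B', In B' (M :: G0) /\ subterm A B') \/ Synth G0 B).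
  { destruct HB as [<-|HB]; [left; exists M; simpl; auto |].
    destruct (HE B HB) as [HB'|HB']; [left; exists B; simpl; auto | right; auto]. }
  destruct Hcase as [(B'&HB'&HAB')|HsB].
  - apply (Norm_lift (Synth_normal_over HsA HG0 HE)); eauto.
    intros G' Hi' HG' HsA'. apply IH; auto.
    apply syn_extends_cons; [right; auto | eapply syn_extends_weaken; eauto].
  - destruct (Synth_guarded_sub HsB HAB HgA) as [HsA0|(A1&B1&HB1&HAB1&HAA1)].
    + apply IH; auto. apply syn_extends_cons; auto. right; auto.
    + assert (HA1 : good A1) by (eapply good_sub; eauto; eapply Forall_good_in; eauto).
      apply (Norm_lift_synth (K := A1) (Synth_ac_eq HsA HAA1 HA1) HG0 HE); eauto.
      intros G' Hi' HG' HsA1. apply IH; auto.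
      apply syn_extends_cons; [right; apply Synth_ac_eq with A1; auto; apply rst_sym; auto |].
      eapply syn_extends_weaken; eauto.
Qed.

Lemma Norm_normal_over D T : Norm D T -> normal_over D T.
Proof.
  induction 1.
  - apply Synth_normal_over; auto.
  - apply normal_over_pL with M N; auto using Norm_good.
  - apply normal_over_signL with M K L; auto using Norm_good.
  - eapply (normal_over_keyed (@Enc S) Synth_enc_inv (@ac_eq_enc_inv S th) (fun _ _ => I)
             (fun _ _ => ltac:(split; auto)) (@Norm_eL)); eauto using Norm_good.
  - eapply (normal_over_keyed (@Blind S) Synth_blind_inv (@ac_eq_blind_inv S th) (fun _ _ => I)
             (fun _ _ => ltac:(split; auto)) (@Norm_blindL1)); eauto using Norm_good.
  - eapply normal_over_blindL2; eauto using Norm_good.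
  - eapply normal_over_gs; eauto using Norm_good.
Qed.

Lemma syn_extends_self G A : Synth G A -> syn_extends G (A :: G).
Proof. intros H x [<-|Hx]; [right | left]; auto. Qed.

(* Cut is admissible: permute the left rules of the derivation of the cut
   formula below the cut, then cut the synthesized formula. *)
Lemma Norm_cut G M : Norm G M -> forall T, Norm (M :: G) T -> Norm G T.
Proof.
  induction 1 as [G M Hs|G M N T' Hg Hin HN IH|G M K L N Hg Hin HinL HKL HN IH
                 |G M K N Hg Hin HsK HN IH|G M K N Hg Hin HsK HN IH
                 |G M R K N Hg Hin HsR HN IH|G A M Hg HA HgA HsA HN IH];
    intros T HT; pose proof (Norm_good HT) as HgT; apply good_seq_iff in HgT;
    destruct HgT as [HgT HgMG]; inversion HgMG; subst;
    [ apply (Norm_normal_over HT); auto using syn_extends_self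
    | apply Norm_pL with M N | apply Norm_signL with M K L | apply Norm_eL with M K
    | apply Norm_blindL1 with M K | apply Norm_blindL2 with M R K
    | apply (Norm_normal_over (D := A :: G)); auto using syn_extends_self ];
    try (apply good_seq_iff; split; auto; fail); auto.
  all: apply IH, (Norm_weaken HT); [intros z [<-|Hz]; simpl; auto |].
  all: constructor; auto; apply (good_seq_ctx (Norm_good HN)).
Qed.

(* The left rules of the derivation of [K] are moved below the rule. *)
Lemma Norm_branching_left (P : ctx) G K N : good N -> (exists B, In B (N :: G) /\ subterm K B) ->
  Norm G K -> Norm (P ++ G) N ->
  (forall G', incl G G' -> Forall good G' -> Synth G' K -> Norm (P ++ G') N -> Norm G' N) ->
  Norm G N.
Proof.
  intros HN HKB HK HPN Hrule. apply (Norm_lift HK); auto.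
  intros G' Hi HG' HsK. apply Hrule; auto.
  apply (Norm_weaken HPN); [apply incl_app_app; auto using incl_refl |].
  apply (good_prefix_weaken P _ (Norm_good HPN) HG').
Qed.

Lemma valid_Norm d : valid th d -> Norm (fst (concl d)) (snd (concl d)).
Proof.
  induction d as [r G T|r G T d1 IH1|r G T d1 IH1 d2 IH2]; simpl.
  - intros (Hg&->&Hid). apply Norm_synth, Synth_id; auto.
  - intros (Hg&Hv1&Hs). specialize (IH1 Hv1). destruct (concl d1) as [G1 T1]; simpl in *.
    inversion Hs; subst; [eapply Norm_pL | eapply Norm_signL]; eauto.
  - intros (Hg&Hv1&Hv2&Hs). specialize (IH1 Hv1). specialize (IH2 Hv2).
    destruct (concl d1) as [G1 A]; destruct (concl d2) as [G2 N]; simpl in *.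
    pose proof (good_seq_concl Hg) as HN.
    inversion Hs; subst.
    + eapply Norm_cut; eauto.
    + apply Norm_right; auto. intros; apply Synth_pair; auto.
    + apply (Norm_branching_left [M; A] HN (K := A)); auto.
      { exists (Enc M A); split; simpl; auto. }
      intros G' Hi HG' HsA HMA. apply Norm_eL with M A; auto. apply good_seq_iff; auto.
    + apply Norm_right; auto. intros; apply Synth_enc; auto.
    + apply Norm_right; auto. intros; apply Synth_sign; auto.
    + apply (Norm_branching_left [M; A] HN (K := A)); auto.
      { exists (Blind M A); split; simpl; auto. }
      intros G' Hi HG' HsA HMA. apply Norm_blindL1 with M A; auto. apply good_seq_iff; auto.
    + apply Norm_right; auto. intros; apply Synth_blind; auto.
    + apply (Norm_branching_left [Sign M K; A] HN (K := A)); auto.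
      { exists (Sign (Blind M A) K); split; simpl; auto. }
      intros G' Hi HG' HsA HMA. apply Norm_blindL2 with M A K; auto. apply good_seq_iff; auto.
    + destruct H as (B&HB&HAB).
      apply (Norm_branching_left [A] HN (K := A)); eauto.
      intros G' Hi HG' HsA HAN. apply Norm_gs with A; auto.
      * apply good_seq_iff; auto.
      * exists B; split; auto. destruct HB as [<-|HB]; simpl; auto.
Qed.

Definition synth_shaped (d : deriv S) :=
  all_nodes (fun n => root_rule n = Rid \/ is_right (root_rule n)) d.

Lemma all_nodes_impl (P Q : deriv S -> Prop) d :
  (forall n, P n -> Q n) -> all_nodes P d -> all_nodes Q d.
Proof. intro H. induction d; simpl; intuition. Qed.

Lemma all_nodes_not_some (P Q : deriv S -> Prop) d :
  all_nodes P d -> (forall n, P n -> ~ Q n) -> ~ some_node Q d.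
Proof.
  intros H1 H2. induction d as [| r G T d IH | r G T d1 IH1 d2 IH2]; simpl in *.
  - intros [Hq|[]]. exact (H2 _ (proj1 H1) Hq).
  - intros [Hq|Hq]; [exact (H2 _ (proj1 H1) Hq) | exact (IH (proj2 H1) Hq)].
  - intros [Hq|[Hq|Hq]];
      [exact (H2 _ (proj1 H1) Hq) | exact (IH1 (proj1 (proj2 H1)) Hq)
      | exact (IH2 (proj2 (proj2 H1)) Hq)].
Qed.

Lemma synth_shaped_root d : synth_shaped d -> root_rule d = Rid \/ is_right (root_rule d).
Proof. unfold synth_shaped; destruct d; simpl; tauto. Qed.

Lemma synth_shaped_no_left d : synth_shaped d -> ~ some_node (fun m => is_left (root_rule m)) d.
Proof.
  intro Hd. eapply all_nodes_not_some; [exact Hd |].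
  intros n [Hn|Hn] Hl; [rewrite Hn in Hl; exact Hl |]. destruct (root_rule n); simpl in *; auto.
Qed.

Lemma synth_shaped_normal d : synth_shaped d -> normal d.
Proof.
  intro H. split; [|split].
  - eapply all_nodes_impl; [|exact H]. intros n [Hn|Hn]; rewrite ?Hn; try discriminate.
    destruct (root_rule n); simpl in *; try discriminate; tauto.
  - induction d; simpl in *.
    + split; [intros _ p [] | exact I].
    + destruct H as [_ H].
      split; [intros _ p [<-|[]]; apply synth_shaped_no_left; auto | exact (IHd H)].
    + destruct H as [_ [Ha Hb]].
      split; [intros _ p [<-|[<-|[]]]; apply synth_shaped_no_left; auto |].
      split; [exact (IHd1 Ha) | exact (IHd2 Hb)].
  - eapply all_nodes_impl; [|exact H].
    intros n [Hn|Hn] Hb; destruct n as [r| r| r]; simpl in *; subst; simpl in *; auto;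
      destruct r; simpl in *; auto.
Qed.

Lemma Synth_deriv G T : Synth G T -> exists d, valid th d /\ concl d = (G, T) /\ synth_shaped d.
Proof.
  induction 1.
  1: { exists (D0 Rid G T). simpl. repeat split; auto. }
  all: destruct IHSynth1 as (d1&V1&C1&S1); destruct IHSynth2 as (d2&V2&C2&S2).
  1: exists (D2 RpR G (Pair M N) d1 d2).
  2: exists (D2 ReR G (Enc M K) d1 d2).
  3: exists (D2 RsignR G (Sign M K) d1 d2).
  4: exists (D2 RblindR G (Blind M K) d1 d2).
  all: simpl; rewrite C1, C2; simpl; repeat split; auto; try (constructor; fail);
    unfold synth_shaped in *; simpl; auto.
  all: right; exact I.
Qed.

Lemma normal_D1 r G T (d1 : deriv S) : r <> Rcut -> ~ is_right r -> ~ is_branching_left r ->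
  normal d1 -> normal (D1 r G T d1).
Proof.
  intros H1 H2 H3 (C&N&L).
  unfold normal, cut_free, no_left_above_right, left_premise_ok in *; simpl.
  repeat split; auto; intro; contradiction.
Qed.

Lemma normal_D2 r G T (d1 d2 : deriv S) : r <> Rcut -> ~ is_right r ->
  synth_shaped d1 -> normal d2 -> normal (D2 r G T d1 d2).
Proof.
  intros H1 H2 H3 H4. pose proof (@synth_shaped_normal d1 H3) as (C1&N1&L1). destruct H4 as (C&N&L).
  unfold normal, cut_free, no_left_above_right, left_premise_ok in *; simpl.
  repeat split; auto; try (intro; contradiction).
  intros _. destruct (@synth_shaped_root d1 H3) as [E|E]; rewrite ?E; simpl; auto.
  destruct (root_rule d1); simpl in *; auto.
Qed.

Lemma Norm_deriv G T : Norm G T -> exists d, valid th d /\ concl d = (G, T) /\ normal d.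
Proof.
  induction 1.
  - destruct (Synth_deriv H) as (d&V&C&Sh). exists d; auto using synth_shaped_normal.
  - destruct IHNorm as (d1&V1&C1&N1). exists (D1 RpL G T d1).
    split; [simpl; rewrite C1; simpl; split; [|split]; auto; apply s_pL; auto |].
    split; [reflexivity | apply normal_D1; simpl; auto; discriminate].
  - destruct IHNorm as (d1&V1&C1&N1). exists (D1 RsignL G N d1).
    split; [simpl; rewrite C1; simpl; split; [|split]; auto; eapply s_signL; eauto |].
    split; [reflexivity | apply normal_D1; simpl; auto; discriminate].
  - destruct IHNorm as (d2&V2&C2&N2). destruct (Synth_deriv H1) as (d1&V1&C1&S1).
    exists (D2 ReL G N d1 d2).
    split; [simpl; rewrite C1, C2; simpl; split; [|split; [|split]]; auto; apply s_eL; auto |].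
    split; [reflexivity | apply normal_D2; simpl; auto; discriminate].
  - destruct IHNorm as (d2&V2&C2&N2). destruct (Synth_deriv H1) as (d1&V1&C1&S1).
    exists (D2 RblindL1 G N d1 d2).
    split; [simpl; rewrite C1, C2; simpl; split; [|split; [|split]]; auto; apply s_blindL1; auto |].
    split; [reflexivity | apply normal_D2; simpl; auto; discriminate].
  - destruct IHNorm as (d2&V2&C2&N2). destruct (Synth_deriv H1) as (d1&V1&C1&S1).
    exists (D2 RblindL2 G N d1 d2).
    split; [simpl; rewrite C1, C2; simpl; split; [|split; [|split]]; auto; apply s_blindL2; auto |].
    split; [reflexivity | apply normal_D2; simpl; auto; discriminate].
  - destruct IHNorm as (d2&V2&C2&N2). destruct (Synth_deriv H2) as (d1&V1&C1&S1).
    exists (D2 Rgs G M d1 d2).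
    split; [simpl; rewrite C1, C2; simpl; split; [|split; [|split]]; auto; apply s_gs; auto |].
    split; [reflexivity | apply normal_D2; simpl; auto; discriminate].
Qed.

End Normalization.

Theorem proposition4 (S : Type) (th : eqtheory S) :
  admissible th ->
  forall (G : ctx S) (M : term S),
    derivable th G M ->
    exists d : deriv S, valid th d /\ normal d /\ concl d = (G, M).
Proof.
  intros Hadm G M (d&Hvalid&Hconcl).
  pose proof (@valid_Norm S th Hadm d Hvalid) as HN. rewrite Hconcl in HN.
  destruct (Norm_deriv HN) as (d'&Hvalid'&Hconcl'&Hnormal). exists d'; auto.
Qed.
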